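(* Let $M=\begin{pmatrix}A&B\\ C&D\end{pmatrix}$ be an operator matrix on $X\oplus Y$, where $A\in\mathcal{L}(X)$ and $D\in\mathcal{L}(Y)$ have g-Drazin inverses, $B\in\mathcal{L}(Y,X)$, $C\in\mathcal{L}(X,Y)$. If $ABC=0$, $ABD=0$, $DCB=0$, $BCBC=0$ and $BCBD=0$, then $M$ has a g-Drazin inverse in $\mathcal{L}(X\oplus Y)$.
   Context: $X,Y$ are complex Banach spaces; $\mathcal{L}(X)$ denotes the Banach algebra of bounded linear operators on $X$, and $\mathcal{L}(Y,X)$ the bounded operators from $Y$ to $X$. An element $a$ of a unital Banach algebra $\mathcal{A}$ is quasinilpotent if $\lim_{n\to\infty}\|a^n\|^{1/n}=0$. An element $a\in\mathcal{A}$ has a g-Drazin (generalized Drazin) inverse if there exists $x\in\mathcal{A}$ with $x=xax$, $ax=xa$, and $a-a^2x$ quasinilpotent; such $x$ is unique and is denoted $a^d$. *)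

From Stdlib Require Import Reals.
Open Scope R_scope.

Record C := mkC { Cre : R ; Cim : R }.
Definition C0 : C := mkC 0 0.
Definition C1 : C := mkC 1 0.
Definition Cadd (z w : C) : C := mkC (Cre z + Cre w) (Cim z + Cim w).
Definition Cmul (z w : C) : C :=
  mkC (Cre z * Cre w - Cim z * Cim w) (Cre z * Cim w + Cim z * Cre w).
Definition Cabs (z : C) : R := sqrt (Cre z * Cre z + Cim z * Cim z).

Record CNormSp := {
  car :> Type ;
  vzero : car ;
  vadd : car -> car -> car ;
  vopp : car -> car ;
  vscal : C -> car -> car ;
  vnorm : car -> R }.

Arguments vzero {_}.
Arguments vadd {_} _ _.
Arguments vopp {_} _.
Arguments vscal {_} _ _.
Arguments vnorm {_} _.

Definition vsub {V : CNormSp} (x y : V) : V := vadd x (vopp y).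

Definition is_CVectorSpace (V : CNormSp) : Prop :=
  (forall x y z : V, vadd x (vadd y z) = vadd (vadd x y) z) /\
  (forall x y : V, vadd x y = vadd y x) /\
  (forall x : V, vadd x vzero = x) /\
  (forall x : V, vadd x (vopp x) = vzero) /\
  (forall x : V, vscal C1 x = x) /\
  (forall (a b : C) (x : V), vscal a (vscal b x) = vscal (Cmul a b) x) /\
  (forall (a : C) (x y : V), vscal a (vadd x y) = vadd (vscal a x) (vscal a y)) /\
  (forall (a b : C) (x : V), vscal (Cadd a b) x = vadd (vscal a x) (vscal b x)).

Definition is_CNorm (V : CNormSp) : Prop :=
  (forall x : V, 0 <= vnorm x) /\
  (forall x : V, vnorm x = 0 -> x = vzero) /\
  (forall (a : C) (x : V), vnorm (vscal a x) = Cabs a * vnorm x) /\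
  (forall x y : V, vnorm (vadd x y) <= vnorm x + vnorm y).

Definition is_complete (V : CNormSp) : Prop :=
  forall u : nat -> V,
    (forall eps, 0 < eps -> exists N, forall m n, (N <= m)%nat -> (N <= n)%nat ->
        vnorm (vsub (u m) (u n)) < eps) ->
    exists l : V, forall eps, 0 < eps -> exists N, forall n, (N <= n)%nat ->
        vnorm (vsub (u n) l) < eps.

Definition is_CBanach (V : CNormSp) : Prop :=
  is_CVectorSpace V /\ is_CNorm V /\ is_complete V.

Definition bounded_linear {V W : CNormSp} (f : V -> W) : Prop :=
  (forall x y : V, f (vadd x y) = vadd (f x) (f y)) /\
  (forall (a : C) (x : V), f (vscal a x) = vscal a (f x)) /\
  (exists K, forall x : V, vnorm (f x) <= K * vnorm x).

Definition is_opnorm {V W : CNormSp} (T : V -> W) (r : R) : Prop :=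
  is_lub (fun c => exists x : V, vnorm x <= 1 /\ c = vnorm (T x)) r.

Fixpoint oppow {V : CNormSp} (n : nat) (T : V -> V) : V -> V :=
  match n with
  | O => fun x => x
  | S k => fun x => T (oppow k T x)
  end.

Definition nroot (n : nat) (r : R) : R :=
  if Rlt_dec 0 r then Rpower r (/ INR n) else 0.

Definition quasinilpotent {V : CNormSp} (T : V -> V) : Prop :=
  exists u : nat -> R,
    (forall n, is_opnorm (oppow n T) (u n)) /\
    Un_cv (fun n => nroot n (u n)) 0.

Definition has_gDrazin {V : CNormSp} (a : V -> V) : Prop :=
  exists x : V -> V,
    bounded_linear x /\
    (forall v, x (a (x v)) = x v) /\
    (forall v, a (x v) = x (a v)) /\
    quasinilpotent (fun v => vsub (a v) (a (a (x v)))).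

Definition prodsp (X Y : CNormSp) : CNormSp := {|
  car := (car X * car Y)%type ;
  vzero := (vzero, vzero) ;
  vadd := fun p q => (vadd (fst p) (fst q), vadd (snd p) (snd q)) ;
  vopp := fun p => (vopp (fst p), vopp (snd p)) ;
  vscal := fun a p => (vscal a (fst p), vscal a (snd p)) ;
  vnorm := fun p => vnorm (fst p) + vnorm (snd p) |}.

Definition opmatrix {X Y : CNormSp} (A : X -> X) (B : Y -> X) (Cc : X -> Y) (D : Y -> Y)
  : prodsp X Y -> prodsp X Y :=
  fun p => (vadd (A (fst p)) (B (snd p)), vadd (Cc (fst p)) (D (snd p))).

From Pilot Require Import Defs.
From Stdlib Require Import Reals Lra Lia List FunctionalExtensionality IndefiniteDescription.
Import ListNotations.
Open Scope R_scope.

(** Instead of the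
   spectral-radius form of quasinilpotence we use the equivalent uniform one
   ([qnil]): for every [eps > 0] there is [K] with [||T^n x|| <= K eps^n ||x||].
   The general facts developed, in order, are:
   - Cline's formula: [g f] has a g-Drazin inverse iff [f g] has one ([cline]);
   - [T] has a g-Drazin inverse iff [T^3] has one ([gDrazin_cube],
     [gDrazin_of_cube]); the converse direction uses that the g-Drazin inverse of
     [T^3] commutes with [T], proved via uniqueness of solutions of Sylvester
     equations [X = G X H] with [G] or [H] quasinilpotent;
   - over Banach spaces a lower triangular matrix [[a, 0], [c, d]] with
     g-Drazin invertible diagonal is g-Drazin invertible
     ([lower_triangular_gDrazin]); the corner of the inverse is assembled from
     solutions of Sylvester equations [X = G X H + Defs.C0], built as Neumann series;
   - hence [P + Q] is g-Drazin invertible when [P], [Q] are and [P Q = 0]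
     ([gDrazin_add_orthogonal]): [P + Q] factors through [X (+) X] as [f g]
     with [g f] lower triangular.
   The theorem: writing [M z = inj1 (row1 z) + inj2 (row2 z)] with the rows of
   [M] and the injections of [X], [Y] into [X (+) Y], we get [M^3 = P + Q] with
   [P = M^2 inj1 row1], [Q = M^2 inj2 row2] and [P Q = 0]; Cline's formula turns
   [P] and [Q] into [row1 M^2 inj1 = A^3 + B (C A + D C)] and
   [row2 M^2 inj2 = C A B + D^3 + C B D], which split again into orthogonal
   g-Drazin invertible pieces. *)

Class VecSp (V : CNormSp) : Prop := vecsp_ax : is_CVectorSpace V.
Class NormSp (V : CNormSp) : Prop := normsp_ax : is_CNorm V.
Class ComplSp (V : CNormSp) : Prop := complsp_ax : is_complete V.

Section VectorAlgebra.
Context {V : CNormSp} {HV : VecSp V}.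

Lemma va_assoc (x y z : V) : vadd x (vadd y z) = vadd (vadd x y) z.
Proof. apply HV. Qed.
Lemma va_comm (x y : V) : vadd x y = vadd y x.
Proof. apply HV. Qed.
Lemma va_0r (x : V) : vadd x vzero = x.
Proof. apply HV. Qed.
Lemma va_oppr (x : V) : vadd x (vopp x) = vzero.
Proof. apply HV. Qed.
Lemma vs_1 (x : V) : vscal Defs.C1 x = x.
Proof. apply HV. Qed.
Lemma vs_mul a b (x : V) : vscal a (vscal b x) = vscal (Cmul a b) x.
Proof. apply HV. Qed.
Lemma vs_distv a (x y : V) : vscal a (vadd x y) = vadd (vscal a x) (vscal a y).
Proof. apply HV. Qed.
Lemma vs_dists a b (x : V) : vscal (Cadd a b) x = vadd (vscal a x) (vscal b x).
Proof. apply HV. Qed.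

Lemma va_0l (x : V) : vadd vzero x = x.
Proof. rewrite va_comm; apply va_0r. Qed.
Lemma va_oppl (x : V) : vadd (vopp x) x = vzero.
Proof. rewrite va_comm; apply va_oppr. Qed.

Lemma va_cancel_l (x y z : V) : vadd x y = vadd x z -> y = z.
Proof.
  intro H. rewrite <- (va_0l y), <- (va_0l z), <- (va_oppl x), <- !va_assoc, H.
  reflexivity.
Qed.

Lemma opp_unique (x y : V) : vadd x y = vzero -> y = vopp x.
Proof. intro H. apply (va_cancel_l x). rewrite H, va_oppr. reflexivity. Qed.

Lemma vopp_opp (x : V) : vopp (vopp x) = x.
Proof. symmetry. apply opp_unique, va_oppl. Qed.

Lemma vopp_zero : vopp (@vzero V) = vzero.
Proof. symmetry. apply opp_unique, va_0r. Qed.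

Lemma va_swap (a b c d : V) : vadd (vadd a b) (vadd c d) = vadd (vadd a c) (vadd b d).
Proof. rewrite <- !va_assoc. f_equal. rewrite !va_assoc. f_equal. apply va_comm. Qed.

Lemma vopp_add (x y : V) : vopp (vadd x y) = vadd (vopp x) (vopp y).
Proof. symmetry. apply opp_unique. rewrite va_swap, !va_oppr, va_0r. reflexivity. Qed.

Lemma vsub_self (x : V) : vsub x x = vzero.
Proof. apply va_oppr. Qed.

Lemma vsub_0r (x : V) : vsub x vzero = x.
Proof. unfold vsub. rewrite vopp_zero. apply va_0r. Qed.

Lemma vsub_eq (x y : V) : vsub x y = vzero -> x = y.
Proof.
  unfold vsub. intro H. apply opp_unique in H.
  rewrite <- (vopp_opp x), <- H, vopp_opp. reflexivity.
Qed.

Lemma vsub_add_cancel (x y : V) : vadd (vsub x y) y = x.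
Proof. unfold vsub. rewrite <- va_assoc, va_oppl, va_0r. reflexivity. Qed.

Lemma vsub_add_distr (a b c d : V) :
  vsub (vadd a b) (vadd c d) = vadd (vsub a c) (vsub b d).
Proof. unfold vsub. rewrite vopp_add. apply va_swap. Qed.

Lemma vs_0 (x : V) : vscal Defs.C0 x = vzero.
Proof.
  apply (va_cancel_l (vscal Defs.C0 x)).
  rewrite <- vs_dists, va_0r. f_equal. unfold Cadd, Defs.C0; simpl. f_equal; ring.
Qed.

Lemma vs_z a : vscal a (@vzero V) = vzero.
Proof. apply (va_cancel_l (vscal a vzero)). rewrite <- vs_distv, !va_0r. reflexivity. Qed.

Lemma vs_opp a (x : V) : vscal a (vopp x) = vopp (vscal a x).
Proof. apply opp_unique. rewrite <- vs_distv, va_oppr. apply vs_z. Qed.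

(** [-x] is the scalar multiple [(-1) x]; this gives [||-x|| = ||x||]. *)
Lemma vopp_m1 (x : V) : vopp x = vscal (mkC (-1) 0) x.
Proof.
  symmetry. apply opp_unique.
  rewrite <- (vs_1 x) at 1. rewrite <- vs_dists.
  replace (Cadd Defs.C1 (mkC (-1) 0)) with Defs.C0 by (unfold Cadd, Defs.C1, Defs.C0; simpl; f_equal; ring).
  apply vs_0.
Qed.

End VectorAlgebra.

Lemma Cabs_real r : Cabs (mkC r 0) = Rabs r.
Proof.
  unfold Cabs; simpl. replace (r * r + 0 * 0) with (Rsqr r) by (unfold Rsqr; ring).
  apply sqrt_Rsqr_abs.
Qed.

Section NormFacts.
Context {V : CNormSp} {HV : VecSp V} {HN : NormSp V}.

Lemma n_ge0 (x : V) : 0 <= vnorm x.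
Proof. apply HN. Qed.
Lemma n_def (x : V) : vnorm x = 0 -> x = vzero.
Proof. apply HN. Qed.
Lemma n_scal a (x : V) : vnorm (vscal a x) = Cabs a * vnorm x.
Proof. apply HN. Qed.
Lemma n_tri (x y : V) : vnorm (vadd x y) <= vnorm x + vnorm y.
Proof. apply HN. Qed.

Lemma n_zero : vnorm (@vzero V) = 0.
Proof. rewrite <- (vs_0 vzero), n_scal. unfold Defs.C0. rewrite Cabs_real, Rabs_R0. ring. Qed.

Lemma n_opp (x : V) : vnorm (vopp x) = vnorm x.
Proof.
  rewrite vopp_m1, n_scal, Cabs_real.
  replace (Rabs (-1)) with 1 by (unfold Rabs; destruct Rcase_abs; lra). ring.
Qed.

Lemma n_sub_sym (x y : V) : vnorm (vsub x y) = vnorm (vsub y x).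
Proof.
  rewrite <- n_opp. f_equal. unfold vsub. rewrite vopp_add, vopp_opp. apply va_comm.
Qed.

Lemma n_tri_sub (x y z : V) : vnorm (vsub x z) <= vnorm (vsub x y) + vnorm (vsub y z).
Proof.
  replace (vsub x z) with (vadd (vsub x y) (vsub y z)) by
    (unfold vsub; rewrite <- va_assoc, (va_assoc (vopp y)), va_oppl, va_0l; reflexivity).
  apply n_tri.
Qed.

Lemma n_sub_le (x y : V) : vnorm x <= vnorm (vsub x y) + vnorm y.
Proof. rewrite <- (vsub_add_cancel x y) at 1. apply n_tri. Qed.

Lemma n_eq0 (x : V) : vnorm x <= 0 -> x = vzero.
Proof. intro H. apply n_def. pose proof (n_ge0 x). lra. Qed.

Lemma geometric_vanish (u : V) C r : 0 <= r < 1 -> (forall n, vnorm u <= C * r ^ n) -> u = vzero.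
Proof.
  intros Hr H. apply n_eq0. destruct (Rle_lt_dec (vnorm u) 0) as [h|h]; auto.
  assert (HC : 0 <= Rabs C) by apply Rabs_pos.
  destruct (pow_lt_1_zero r ltac:(rewrite Rabs_right; lra) (vnorm u / (Rabs C + 1)))
    as [N HN0]; [apply Rdiv_lt_0_compat; lra|].
  specialize (HN0 N (Nat.le_refl N)). specialize (H N).
  assert (C * r ^ N <= Rabs C * Rabs (r ^ N)) by (rewrite <- Rabs_mult; apply Rle_abs).
  assert (Rabs C * Rabs (r ^ N) <= Rabs C * (vnorm u / (Rabs C + 1)))
    by (apply Rmult_le_compat_l; lra).
  assert (Rabs C * (vnorm u / (Rabs C + 1)) < vnorm u).
  { apply Rmult_lt_reg_r with (Rabs C + 1). lra. field_simplify; lra. }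
  lra.
Qed.

End NormFacts.

Definition bnd {V W : CNormSp} (f : V -> W) (K : R) := forall x, vnorm (f x) <= K * vnorm x.

Section BoundedLinear.
Context {V W : CNormSp} {HV : VecSp V} {HW : VecSp W} {HNV : NormSp V} {HNW : NormSp W}.

Lemma bl_add (f : V -> W) : bounded_linear f -> forall x y, f (vadd x y) = vadd (f x) (f y).
Proof. intro H. apply H. Qed.
Lemma bl_scal (f : V -> W) : bounded_linear f -> forall a x, f (vscal a x) = vscal a (f x).
Proof. intro H. apply H. Qed.

Lemma bl_0 (f : V -> W) : bounded_linear f -> f vzero = vzero.
Proof. intro Hf. apply (va_cancel_l (f vzero)). rewrite <- (bl_add f Hf), !va_0r. reflexivity. Qed.

Lemma bl_opp (f : V -> W) : bounded_linear f -> forall x, f (vopp x) = vopp (f x).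
Proof. intros Hf x. apply opp_unique. rewrite <- (bl_add f Hf), va_oppr. apply bl_0, Hf. Qed.

Lemma bl_sub (f : V -> W) : bounded_linear f -> forall x y, f (vsub x y) = vsub (f x) (f y).
Proof. intros Hf x y. unfold vsub. rewrite (bl_add f Hf), (bl_opp f Hf). reflexivity. Qed.

Lemma bl_bnd (f : V -> W) : bounded_linear f -> exists K, 0 <= K /\ bnd f K.
Proof.
  intros [_ [_ [K HK]]]. exists (Rmax K 0). split; [apply Rmax_r|].
  intro x. eapply Rle_trans; [apply HK|]. apply Rmult_le_compat_r; [apply n_ge0|apply Rmax_l].
Qed.

End BoundedLinear.

Section Composition.
Context {U V W : CNormSp} {HU : VecSp U} {HV : VecSp V} {HW : VecSp W}
  {HNU : NormSp U} {HNV : NormSp V} {HNW : NormSp W}.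

Lemma bnd_comp (f : V -> W) (g : U -> V) K1 K2 :
  0 <= K1 -> bnd f K1 -> bnd g K2 -> bnd (fun x => f (g x)) (K1 * K2).
Proof.
  intros Kp H1 H2 x. eapply Rle_trans; [apply H1|]. rewrite Rmult_assoc.
  apply Rmult_le_compat_l; auto.
Qed.

Lemma bl_comp (f : V -> W) (g : U -> V) :
  bounded_linear f -> bounded_linear g -> bounded_linear (fun x => f (g x)).
Proof.
  intros Hf Hg. destruct (bl_bnd f Hf) as [K1 [K1p H1]]. destruct (bl_bnd g Hg) as [K2 [_ H2]].
  split; [|split].
  - intros x y. rewrite (bl_add g Hg), (bl_add f Hf). reflexivity.
  - intros a x. rewrite (bl_scal g Hg), (bl_scal f Hf). reflexivity.
  - exists (K1 * K2). apply bnd_comp; auto.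
Qed.

End Composition.

Section LinearCombinations.
Context {V W : CNormSp} {HV : VecSp V} {HW : VecSp W} {HNV : NormSp V} {HNW : NormSp W}.

Lemma bl_id : bounded_linear (fun x : V => x).
Proof. repeat split; auto. exists 1. intro; lra. Qed.

Lemma bl_zero : bounded_linear (fun _ : V => @vzero W).
Proof.
  split; [|split].
  - intros. rewrite va_0r. reflexivity.
  - intros. rewrite vs_z. reflexivity.
  - exists 0. intro. rewrite n_zero. lra.
Qed.

Lemma bl_plus (f g : V -> W) : bounded_linear f -> bounded_linear g ->
  bounded_linear (fun x => vadd (f x) (g x)).
Proof.
  intros Hf Hg. destruct (bl_bnd f Hf) as [K1 [_ H1]]. destruct (bl_bnd g Hg) as [K2 [_ H2]].
  split; [|split].
  - intros x y. rewrite (bl_add f Hf), (bl_add g Hg). apply va_swap.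
  - intros a x. rewrite (bl_scal g Hg), (bl_scal f Hf), vs_distv. reflexivity.
  - exists (K1 + K2). intro x. eapply Rle_trans; [apply n_tri|].
    specialize (H1 x). specialize (H2 x). lra.
Qed.

Lemma bl_neg (f : V -> W) : bounded_linear f -> bounded_linear (fun x => vopp (f x)).
Proof.
  intros Hf. destruct (bl_bnd f Hf) as [K [_ HK]]. split; [|split].
  - intros x y. rewrite (bl_add f Hf), vopp_add. reflexivity.
  - intros a x. rewrite (bl_scal f Hf), vs_opp. reflexivity.
  - exists K. intro x. rewrite n_opp. apply HK.
Qed.

Lemma bl_minus (f g : V -> W) : bounded_linear f -> bounded_linear g ->
  bounded_linear (fun x => vsub (f x) (g x)).
Proof. intros. unfold vsub. apply bl_plus; auto. apply bl_neg; auto. Qed.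

End LinearCombinations.

Lemma oppow_S' {V : CNormSp} n (T : V -> V) x : oppow (S n) T x = oppow n T (T x).
Proof. induction n; simpl; auto. simpl in IHn. rewrite IHn. reflexivity. Qed.

Lemma oppow_add {V : CNormSp} m n (T : V -> V) x :
  oppow (m + n) T x = oppow m T (oppow n T x).
Proof. induction m; simpl; auto. rewrite IHm. reflexivity. Qed.

Lemma oppow_mul {V : CNormSp} m n (T : V -> V) x :
  oppow (m * n) T x = oppow m (oppow n T) x.
Proof. induction m; simpl; auto. rewrite oppow_add, IHm. reflexivity. Qed.

Lemma oppow_ext {V : CNormSp} n (T T' : V -> V) :
  (forall x, T x = T' x) -> forall x, oppow n T x = oppow n T' x.
Proof. intros H x. induction n; simpl; auto. rewrite IHn, H. reflexivity. Qed.

Lemma oppow_comm {V : CNormSp} n (T S : V -> V) :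
  (forall x, T (S x) = S (T x)) -> forall x, oppow n T (S x) = S (oppow n T x).
Proof. intros H x. induction n; simpl; auto. rewrite IHn, H. reflexivity. Qed.

Section Powers.
Context {V : CNormSp} {HV : VecSp V} {HNV : NormSp V}.

Lemma oppow_bl n (T : V -> V) : bounded_linear T -> bounded_linear (oppow n T).
Proof. intro HT. induction n; simpl; [apply bl_id | apply bl_comp; auto]. Qed.

Lemma oppow_bnd n (T : V -> V) K : 0 <= K -> bnd T K -> bnd (oppow n T) (K ^ n).
Proof. intros Kp HT. induction n; simpl; [intro x; lra | apply bnd_comp; auto]. Qed.

End Powers.

(** ** Quasinilpotence in uniform form *)

Definition qnil {V : CNormSp} (T : V -> V) :=
  forall eps, 0 < eps -> exists K, 0 <= K /\ forall n x, vnorm (oppow n T x) <= K * eps ^ n * vnorm x.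

Lemma qnil_ext {V : CNormSp} (T T' : V -> V) : (forall v, T v = T' v) -> qnil T -> qnil T'.
Proof.
  intros E H e He. destruct (H e He) as [K [Kp HK]]. exists K. split; auto.
  intros n x. rewrite <- (oppow_ext n T T' E). apply HK.
Qed.

Lemma INR_le_2pow n : INR n <= 2 ^ n.
Proof.
  induction n; [simpl; lra|]. rewrite S_INR. simpl.
  assert (1 <= 2 ^ n) by (apply pow_R1_Rle; lra). lra.
Qed.

Lemma Rpower_le_base r y a : 0 < r -> r <= y -> 0 <= a -> Rpower r a <= Rpower y a.
Proof.
  intros Hr Hy Ha. unfold Rpower.
  destruct (Rle_lt_or_eq_dec _ _ Hy) as [H|H]; [|subst; lra].
  destruct (Rle_lt_or_eq_dec _ _ Ha) as [H2|H2]; [|subst; rewrite !Rmult_0_l; lra].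
  left. apply exp_increasing, Rmult_lt_compat_l; auto. apply ln_increasing; auto.
Qed.

Lemma nroot_le n r y : (1 <= n)%nat -> 0 < y -> r <= y ^ n -> nroot n r <= y.
Proof.
  intros Hn Hy Hry. unfold nroot. destruct (Rlt_dec 0 r); [|lra].
  apply Rle_trans with (Rpower (y ^ n) (/ INR n)).
  - apply Rpower_le_base; auto. left. apply Rinv_0_lt_compat, lt_0_INR. lia.
  - rewrite <- Rpower_pow, Rpower_mult, Rinv_r by (auto; apply not_0_INR; lia).
    rewrite Rpower_1; lra.
Qed.

Lemma nroot_ge0 n r : 0 <= nroot n r.
Proof. unfold nroot. destruct (Rlt_dec 0 r); [|lra]. unfold Rpower. left; apply exp_pos. Qed.

Lemma pow_lt_mono x y n : 0 <= x -> x < y -> (1 <= n)%nat -> x ^ n < y ^ n.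
Proof.
  intros H0 H1 Hn. induction n; [lia|]. destruct n; [simpl; lra|].
  assert (IH : x ^ S n < y ^ S n) by (apply IHn; lia).
  change (x * x ^ S n < y * y ^ S n). assert (0 <= x ^ S n) by (apply pow_le; auto).
  apply Rle_lt_trans with (x * y ^ S n); [apply Rmult_le_compat_l; lra|].
  apply Rmult_lt_compat_r; [apply pow_lt; lra | auto].
Qed.

Lemma nroot_lt n r y : (1 <= n)%nat -> 0 < y -> nroot n r < y -> r < y ^ n.
Proof.
  intros Hn Hy H. unfold nroot in H. destruct (Rlt_dec 0 r) as [Hr|Hr].
  - assert (E : r = Rpower (Rpower r (/ INR n)) (INR n)).
    { rewrite Rpower_mult, Rinv_l, Rpower_1; auto. apply not_0_INR; lia. }
    rewrite E, Rpower_pow by (unfold Rpower; apply exp_pos).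
    apply pow_lt_mono; auto. unfold Rpower; left; apply exp_pos.
  - assert (0 < y ^ n) by (apply pow_lt; auto). lra.
Qed.

Lemma finite_bound (f : nat -> R) N : exists K, 0 <= K /\ forall n, (n < N)%nat -> f n <= K.
Proof.
  induction N as [|N [K [Kp HK]]]; [exists 0; split; [lra | intros; lia]|].
  exists (Rmax K (f N)). split; [eapply Rle_trans; [apply Kp | apply Rmax_l]|].
  intros n Hn. destruct (Nat.eq_dec n N); [subst; apply Rmax_r|].
  eapply Rle_trans; [apply HK; lia | apply Rmax_l].
Qed.

Section OperatorNorm.
Context {V : CNormSp} {HV : VecSp V} {HN : NormSp V}.

Lemma opnorm_sig (S : V -> V) K : bnd S K -> {r | is_opnorm S r}.
Proof.
  intro HS. apply completeness.
  - exists (Rmax K 0). intros c [x [Hx ->]]. eapply Rle_trans; [apply HS|].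
    pose proof (n_ge0 x). destruct (Rle_dec 0 K).
    + rewrite Rmax_left by lra. rewrite <- (Rmult_1_r K) at 2. apply Rmult_le_compat_l; lra.
    + rewrite Rmax_right by lra. nra.
  - exists (vnorm (S vzero)), vzero. split; auto. rewrite n_zero. lra.
Qed.

Lemma opnorm_le (S : V -> V) r K : 0 <= K -> is_opnorm S r -> bnd S K -> r <= K.
Proof.
  intros Kp [_ Hlub] HS. apply Hlub. intros c [x [Hx ->]].
  eapply Rle_trans; [apply HS|]. rewrite <- (Rmult_1_r K) at 2. apply Rmult_le_compat_l; lra.
Qed.

Lemma opnorm_bound (S : V -> V) r :
  bounded_linear S -> is_opnorm S r -> forall x, vnorm (S x) <= r * vnorm x.
Proof.
  intros HS [Hub _] x. destruct (Req_dec (vnorm x) 0) as [H0|H0].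
  { apply n_def in H0. subst. rewrite (bl_0 S HS), n_zero. lra. }
  assert (Hx : 0 < vnorm x) by (pose proof (n_ge0 x); lra).
  set (c := / vnorm x). assert (Hc : 0 < c) by (apply Rinv_0_lt_compat; auto).
  assert (H1 : vnorm (S (vscal (mkC c 0) x)) <= r).
  { apply Hub. exists (vscal (mkC c 0) x). split; auto.
    rewrite n_scal, Cabs_real, Rabs_right by lra. unfold c. rewrite Rinv_l; lra. }
  rewrite (bl_scal S HS), n_scal, Cabs_real, Rabs_right in H1 by lra.
  unfold c in H1. apply Rmult_le_compat_r with (r := vnorm x) in H1; [|lra].
  rewrite Rmult_comm, <- Rmult_assoc, Rinv_r in H1; lra.
Qed.

Lemma qnil_quasinilpotent (T : V -> V) : qnil T -> quasinilpotent T.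
Proof.
  intros Hq. destruct (Hq 1 Rlt_0_1) as [K1 [K1p HK1]].
  assert (Hb : forall n, bnd (oppow n T) (K1 * 1 ^ n)) by (intros n x; apply HK1).
  exists (fun n => proj1_sig (opnorm_sig _ _ (Hb n))).
  split; [intro n; exact (proj2_sig (opnorm_sig _ _ (Hb n)))|].
  intros e He. destruct (Hq (e / 4)) as [K [Kp HK]]; [lra|].
  destruct (INR_unbounded K) as [N HN0]. exists (S N). intros n Hn.
  destruct (opnorm_sig _ _ (Hb n)) as [r Hr]; simpl.
  assert (Hr1 : r <= (e / 2) ^ n).
  { refine (opnorm_le _ _ ((e / 2) ^ n) _ Hr _); [apply pow_le; lra|]. intro x.
    eapply Rle_trans; [apply HK|]. apply Rmult_le_compat_r; [apply n_ge0|].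
    assert (K <= 2 ^ n).
    { apply Rle_trans with (INR n); [|apply INR_le_2pow].
      left. apply Rlt_le_trans with (INR N); [apply HN0 | apply le_INR; lia]. }
    replace ((e / 2) ^ n) with (2 ^ n * (e / 4) ^ n) by
      (rewrite <- Rpow_mult_distr; f_equal; lra).
    apply Rmult_le_compat_r; [apply pow_le; lra | auto]. }
  unfold R_dist. rewrite Rminus_0_r, Rabs_right by (apply Rle_ge, nroot_ge0).
  apply Rle_lt_trans with (e / 2); [apply nroot_le; auto; lia || lra | lra].
Qed.

Lemma quasinilpotent_qnil (T : V -> V) : bounded_linear T -> quasinilpotent T -> qnil T.
Proof.
  intros HT [u [Hu Hc]] eps Heps. destruct (Hc eps Heps) as [N HN0].
  destruct (finite_bound (fun n => u n / eps ^ n) (S N)) as [K [Kp HK]].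
  exists (Rmax K 1). split; [eapply Rle_trans; [apply Kp | apply Rmax_l]|].
  intros n x. eapply Rle_trans; [apply (opnorm_bound _ _ (oppow_bl n T HT) (Hu n))|].
  apply Rmult_le_compat_r; [apply n_ge0|].
  assert (Hp : 0 < eps ^ n) by (apply pow_lt; auto).
  destruct (Compare_dec.le_lt_dec (S N) n) as [Hn|Hn].
  - specialize (HN0 n ltac:(lia)). unfold R_dist in HN0. rewrite Rminus_0_r in HN0.
    apply Rle_lt_trans with (r1 := nroot n (u n)) in HN0; [|apply Rle_abs].
    apply nroot_lt in HN0; [|lia|auto]. assert (1 <= Rmax K 1) by apply Rmax_r.
    left. eapply Rlt_le_trans; [apply HN0|].
    rewrite <- (Rmult_1_l (eps ^ n)) at 1. apply Rmult_le_compat_r; lra.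
  - specialize (HK n Hn). simpl in HK.
    replace (u n) with (u n / eps ^ n * eps ^ n) by (field; lra).
    apply Rmult_le_compat_r; [lra|]. eapply Rle_trans; [apply HK | apply Rmax_l].
Qed.

End OperatorNorm.

(** ** g-Drazin inverses and the spectral idempotent *)

Definition gDrazin_inv {V : CNormSp} (a x : V -> V) :=
  bounded_linear x /\ (forall v, x (a (x v)) = x v) /\ (forall v, a (x v) = x (a v)) /\
  qnil (fun v => vsub (a v) (a (a (x v)))).

Lemma has_gDrazin_ext {V : CNormSp} (a b : V -> V) :
  has_gDrazin a -> (forall v, a v = b v) -> has_gDrazin b.
Proof. intros H E. replace b with a; auto. apply functional_extensionality; auto. Qed.

Section SpectralIdempotent.
Context {V : CNormSp} {HV : VecSp V} {HN : NormSp V}.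

Lemma gDrazin_inv_has (a x : V -> V) : gDrazin_inv a x -> has_gDrazin a.
Proof.
  intros [H1 [H2 [H3 H4]]]. exists x. split; [|split; [|split]]; auto.
  apply qnil_quasinilpotent; auto.
Qed.

Lemma has_gDrazin_inv (a : V -> V) : bounded_linear a -> has_gDrazin a -> exists x, gDrazin_inv a x.
Proof.
  intros Ha [x [H1 [H2 [H3 H4]]]]. exists x. split; [|split; [|split]]; auto.
  apply quasinilpotent_qnil; auto. apply bl_minus; auto. repeat (apply bl_comp; auto).
Qed.

Variables (a x : V -> V).
Hypotheses (Ha : bounded_linear a) (Hx : gDrazin_inv a x).

Definition sproj v := vsub v (a (x v)).

Lemma gd_bl : bounded_linear x.
Proof. apply Hx. Qed.
Lemma gd_xax v : x (a (x v)) = x v.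
Proof. apply Hx. Qed.
Lemma gd_comm v : a (x v) = x (a v).
Proof. apply Hx. Qed.

Lemma gd_axx v : a (x (x v)) = x v.
Proof. rewrite gd_comm. apply gd_xax. Qed.

Lemma sproj_bl : bounded_linear sproj.
Proof. apply bl_minus; [apply bl_id | apply bl_comp; auto; apply gd_bl]. Qed.

Lemma x_sproj v : x (sproj v) = vzero.
Proof. unfold sproj. rewrite (bl_sub _ gd_bl), gd_xax. apply vsub_self. Qed.

Lemma sproj_x v : sproj (x v) = vzero.
Proof. unfold sproj. rewrite (gd_comm (x v)), gd_xax. apply vsub_self. Qed.

Lemma sproj_idem v : sproj (sproj v) = sproj v.
Proof. unfold sproj at 1. rewrite x_sproj, (bl_0 a Ha). apply vsub_0r. Qed.

Lemma sproj_a v : sproj (a v) = a (sproj v).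
Proof. unfold sproj. rewrite (bl_sub _ Ha), (gd_comm v). reflexivity. Qed.

Lemma sproj_split v : v = vadd (a (x v)) (sproj v).
Proof. unfold sproj. rewrite va_comm, vsub_add_cancel. reflexivity. Qed.

Lemma gd_residual v : vsub (a v) (a (a (x v))) = a (sproj v).
Proof. unfold sproj. rewrite (bl_sub _ Ha). reflexivity. Qed.

Lemma gd_residual_qnil : qnil (fun v => a (sproj v)).
Proof. apply (qnil_ext _ _ gd_residual). apply Hx. Qed.

End SpectralIdempotent.

(** ** Cline's formula *)

Section Cline.
Context {V W : CNormSp} {HV : VecSp V} {HNV : NormSp V} {HW : VecSp W} {HNW : NormSp W}.

Lemma qnil_factor (z : W -> W) (f : V -> W) (q : V -> V) (h : W -> V) :
  bounded_linear f -> bounded_linear h -> qnil q ->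
  (forall n w, oppow (S n) z w = f (oppow n q (h w))) -> qnil z.
Proof.
  intros Hf Hh Hq Ez eps Heps.
  destruct (bl_bnd f Hf) as [Kf [Kfp HKf]]. destruct (bl_bnd h Hh) as [Kh [Khp HKh]].
  destruct (Hq eps Heps) as [K [Kp HK]].
  set (c := Kf * K * Kh / eps).
  assert (Hc : 0 <= c) by (unfold c, Rdiv; repeat apply Rmult_le_pos; auto; left;
    apply Rinv_0_lt_compat; auto).
  exists (1 + c). split; [lra|]. intros n w. pose proof (n_ge0 w).
  destruct n as [|n]; [simpl; nra|]. rewrite Ez.
  assert (0 <= eps ^ n) by (apply pow_le; lra).
  apply Rle_trans with (Kf * (K * eps ^ n * (Kh * vnorm w))).
  - eapply Rle_trans; [apply HKf|]. apply Rmult_le_compat_l; auto.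
    eapply Rle_trans; [apply HK|]. apply Rmult_le_compat_l; [apply Rmult_le_pos; auto|]. apply HKh.
  - replace (Kf * (K * eps ^ n * (Kh * vnorm w))) with (c * eps ^ S n * vnorm w)
      by (unfold c; simpl; field; lra).
    apply Rmult_le_compat_r; auto. apply Rmult_le_compat_r; [apply pow_le | ]; lra.
Qed.

Lemma cline (f : V -> W) (g : W -> V) : bounded_linear f -> bounded_linear g ->
  has_gDrazin (fun v => g (f v)) -> has_gDrazin (fun w => f (g w)).
Proof.
  intros Hf Hg H. set (gf := fun v => g (f v)).
  assert (Hgf : bounded_linear gf) by (unfold gf; apply bl_comp; auto).
  destruct (has_gDrazin_inv gf Hgf H) as [r Hr].
  pose proof (gd_bl _ _ Hr) as Hrb.
  pose proof (gd_comm gf r Hr) as Hc. pose proof (gd_xax gf r Hr) as Hx.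
  pose proof (gd_axx gf r Hr) as Hrr. unfold gf in Hc, Hx, Hrr.
  set (p := sproj gf r).
  apply gDrazin_inv_has with (x := fun w => f (r (r (g w)))).
  split; [|split; [|split]].
  - repeat (apply bl_comp; auto).
  - intro w. rewrite Hrr, Hx. reflexivity.
  - intro w. rewrite Hrr, <- Hc, Hx. reflexivity.
  - apply (qnil_factor _ f (fun v => gf (p v)) (fun w => p (g w))); auto.
    + apply bl_comp; auto. apply sproj_bl; auto.
    + apply gd_residual_qnil; auto.
    + assert (Ez : forall w, vsub (f (g w)) (f (g (f (g (f (r (r (g w)))))))) = f (p (g w))).
      { intro w. rewrite Hrr. unfold p, sproj. rewrite (bl_sub _ Hf). reflexivity. }
      induction n as [|n IH]; intro w; [apply Ez|].
      change (oppow (S (S n)) ?z w) with (z (oppow (S n) z w)).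
      rewrite IH, Ez. simpl. f_equal. apply (sproj_a gf r Hgf Hr).
Qed.

End Cline.

(** ** Sylvester equations [X = G X H + C0] with [G] or [H] quasinilpotent *)

Lemma pow_ratio_le L n : 0 <= L -> L ^ n * (/ (2 * (L + 1))) ^ n <= (/ 2) ^ n.
Proof.
  intro HL. rewrite <- Rpow_mult_distr. apply pow_incr. rewrite Rinv_mult.
  assert (Hi : 0 < / (L + 1)) by (apply Rinv_0_lt_compat; lra).
  assert (Ei : (L + 1) * / (L + 1) = 1) by (field; lra).
  split; nra.
Qed.

Section SylvesterBound.
Context {V W : CNormSp} {HV : VecSp V} {HNV : NormSp V} {HW : VecSp W} {HNW : NormSp W}.

Lemma sylvester_term_bound (G : W -> W) (H : V -> V) (C0 : V -> W) :
  bounded_linear G -> bounded_linear H -> bounded_linear C0 -> qnil G \/ qnil H ->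
  exists B, 0 <= B /\
    forall n v, vnorm (oppow n G (C0 (oppow n H v))) <= B * (/ 2) ^ n * vnorm v.
Proof.
  intros HG HH HC Hq.
  destruct (bl_bnd G HG) as [Kg [Kgp HKg]]. destruct (bl_bnd H HH) as [Kh [Khp HKh]].
  destruct (bl_bnd C0 HC) as [Kc [Kcp HKc]].
  destruct Hq as [Hq|Hq].
  - destruct (Hq (/ (2 * (Kh + 1)))) as [K [Kp HK]]; [apply Rinv_0_lt_compat; lra|].
    exists (K * Kc). split; [nra|]. intros n v.
    pose proof (bnd_comp _ _ _ _ Kcp HKc (oppow_bnd n H Kh Khp HKh) v) as HCH.
    pose proof (pow_ratio_le Kh n Khp). pose proof (n_ge0 v).
    assert (0 <= (/ (2 * (Kh + 1))) ^ n) by (apply pow_le; left; apply Rinv_0_lt_compat; lra).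
    eapply Rle_trans; [apply HK|].
    apply Rle_trans with (K * Kc * vnorm v * (Kh ^ n * (/ (2 * (Kh + 1))) ^ n));
      [|assert (0 <= K * Kc * vnorm v) by (repeat apply Rmult_le_pos; auto); nra].
    replace (K * Kc * vnorm v * (Kh ^ n * (/ (2 * (Kh + 1))) ^ n))
      with (K * (/ (2 * (Kh + 1))) ^ n * (Kc * Kh ^ n * vnorm v)) by ring.
    apply Rmult_le_compat_l; [apply Rmult_le_pos|]; auto.
  - destruct (Hq (/ (2 * (Kg + 1)))) as [K [Kp HK]]; [apply Rinv_0_lt_compat; lra|].
    exists (K * Kc). split; [nra|]. intros n v.
    pose proof (pow_ratio_le Kg n Kgp). pose proof (n_ge0 v).
    assert (0 <= (/ (2 * (Kg + 1))) ^ n) by (apply pow_le; left; apply Rinv_0_lt_compat; lra).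
    eapply Rle_trans; [apply (oppow_bnd n G Kg Kgp HKg)|].
    eapply Rle_trans; [apply Rmult_le_compat_l; [apply pow_le; auto | apply HKc]|].
    eapply Rle_trans; [apply Rmult_le_compat_l; [apply pow_le; auto|];
      apply Rmult_le_compat_l; [auto | apply HK]|].
    replace (Kg ^ n * (Kc * (K * (/ (2 * (Kg + 1))) ^ n * vnorm v)))
      with (K * Kc * vnorm v * (Kg ^ n * (/ (2 * (Kg + 1))) ^ n)) by ring.
    assert (0 <= K * Kc * vnorm v) by (repeat apply Rmult_le_pos; auto). nra.
Qed.

Lemma sylvester_unique (X : V -> W) (G : W -> W) (H : V -> V) :
  bounded_linear X -> bounded_linear G -> bounded_linear H -> qnil G \/ qnil H ->
  (forall v, X v = G (X (H v))) -> forall v, X v = vzero.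
Proof.
  intros HX HG HH Hq E v.
  destruct (sylvester_term_bound G H X HG HH HX Hq) as [B [Bp HB]].
  assert (Ei : forall n, X v = oppow n G (X (oppow n H v))).
  { induction n as [|n IH]; [reflexivity|]. rewrite IH, E. simpl. apply oppow_comm. auto. }
  apply (geometric_vanish _ (B * vnorm v) (/ 2)); [lra|]. intro n.
  rewrite (Ei n). eapply Rle_trans; [apply HB | right; ring].
Qed.

End SylvesterBound.

(** ** [T] is g-Drazin invertible iff [T^3] is *)

Section Cube.
Context {V : CNormSp} {HV : VecSp V} {HN : NormSp V}.

Lemma oppow_cube n (k : V -> V) x : oppow n (fun v => k (k (k v))) x = oppow (n * 3) k x.
Proof. rewrite oppow_mul. apply oppow_ext. reflexivity. Qed.

Lemma qnil_cube (k : V -> V) : qnil k -> qnil (fun v => k (k (k v))).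
Proof.
  intros Hk eps He. set (d := Rmin eps 1).
  assert (Hd : 0 < d) by (unfold d; apply Rmin_pos; lra).
  assert (d <= 1) by apply Rmin_r. assert (d <= eps) by apply Rmin_l.
  destruct (Hk d Hd) as [K [Kp HK]]. exists K. split; auto. intros n x.
  rewrite oppow_cube. eapply Rle_trans; [apply HK|].
  apply Rmult_le_compat_r; [apply n_ge0|]. apply Rmult_le_compat_l; auto.
  rewrite Nat.mul_comm, pow_mult. apply pow_incr. simpl. split; [nra|].
  assert (d * d <= 1) by nra. nra.
Qed.

Lemma qnil_of_cube (k : V -> V) L : 0 <= L -> bnd k L -> qnil (fun v => k (k (k v))) -> qnil k.
Proof.
  intros Lp HL Hk eps He. set (M := Rmax (L / eps) 1).
  assert (HM1 : 1 <= M) by apply Rmax_r.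
  assert (HM2 : L <= M * eps).
  { apply Rle_trans with (L / eps * eps); [right; field; lra|].
    apply Rmult_le_compat_r; [lra | apply Rmax_l]. }
  destruct (Hk (eps ^ 3)) as [K [Kp HK]]; [apply pow_lt; auto|].
  exists (K * M ^ 2). split; [apply Rmult_le_pos; auto; apply pow_le; lra|].
  intros n x. pose proof (Nat.div_mod_eq n 3) as Hn.
  set (m := (n / 3)%nat) in *. set (r := (n mod 3)%nat) in *.
  assert (Hr : (r < 3)%nat) by (apply Nat.mod_upper_bound; lia).
  replace n with (r + m * 3)%nat by lia. rewrite oppow_add, <- oppow_cube.
  eapply Rle_trans; [apply (oppow_bnd r k L Lp HL)|].
  eapply Rle_trans; [apply Rmult_le_compat_l; [apply pow_le; auto | apply HK]|].
  rewrite pow_add, (Nat.mul_comm m 3), pow_mult.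
  assert (A : L ^ r <= M ^ 2 * eps ^ r).
  { apply Rle_trans with ((M * eps) ^ r); [apply pow_incr; lra|].
    rewrite Rpow_mult_distr. apply Rmult_le_compat_r; [apply pow_le; lra|].
    apply Rle_pow; auto; lia. }
  assert (0 <= (eps ^ 3) ^ m) by (apply pow_le, pow_le; lra).
  pose proof (n_ge0 x).
  apply Rle_trans with ((M ^ 2 * eps ^ r) * (K * (eps ^ 3) ^ m * vnorm x)); [|right; ring].
  apply Rmult_le_compat_r; auto. repeat apply Rmult_le_pos; auto.
Qed.

(** A g-Drazin inverse [z] of [g] commutes with every bounded [t] commuting with [g]:
    both [g z t p] and [p t g z] ([p] the spectral idempotent) solve homogeneous
    Sylvester equations with a quasinilpotent coefficient [g p]. *)
Lemma gDrazin_inv_commute (g z t : V -> V) : bounded_linear g -> bounded_linear t ->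
  gDrazin_inv g z -> (forall v, t (g v) = g (t v)) -> forall v, t (z v) = z (t v).
Proof.
  intros Hg Ht Hz Htg.
  pose proof (gd_bl _ _ Hz) as Hzb.
  pose proof (gd_comm g z Hz) as Hc. pose proof (gd_xax g z Hz) as Hx.
  pose proof (gd_axx g z Hz) as Hzz.
  set (p := sproj g z).
  assert (Hp : bounded_linear p) by (apply sproj_bl; auto).
  assert (Hpp : forall v, p (p v) = p v) by apply (sproj_idem g z Hg Hz).
  assert (Hpg : forall v, p (g v) = g (p v)) by apply (sproj_a g z Hg Hz).
  assert (Hq : qnil (fun v => g (p v))) by (apply gd_residual_qnil; auto).
  assert (Hgp : bounded_linear (fun v => g (p v))) by (apply bl_comp; auto).
  assert (S1 : forall v, g (z (t (p v))) = vzero).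
  { apply (sylvester_unique (fun v => g (z (t (p v)))) z (fun v => g (p v)));
      auto; [repeat (apply bl_comp; auto)|].
    intro v. rewrite Hpg, Hpp, Hx, Htg, Hc. reflexivity. }
  assert (S2 : forall v, p (t (g (z v))) = vzero).
  { apply (sylvester_unique (fun v => p (t (g (z v)))) (fun v => g (p v)) z);
      auto; [repeat (apply bl_comp; auto)|].
    intro v. rewrite Hpp, Hzz, Htg, Hpg. reflexivity. }
  assert (T1 : forall v, t (g (z v)) = g (z (t (g (z v))))).
  { intro v. rewrite (sproj_split g z (t (g (z v)))) at 1. fold p. rewrite S2, va_0r.
    reflexivity. }
  assert (T2 : forall v, g (z (t v)) = g (z (t (g (z v))))).
  { intro v. rewrite (sproj_split g z v) at 1. fold p.
    rewrite (bl_add t Ht), (bl_add z Hzb), (bl_add g Hg), S1, va_0r. reflexivity. }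
  assert (T3 : forall v, t (g (z v)) = g (z (t v))) by (intro v; rewrite T1, (T2 v); auto).
  intro v. transitivity (g (z (t (z v)))).
  - rewrite <- (Hzz v) at 1. apply T3.
  - symmetry. rewrite <- (Hx (t v)) at 1. rewrite <- (T3 v), Htg, <- Hc. reflexivity.
Qed.

Lemma gDrazin_of_cube (t : V -> V) :
  bounded_linear t -> has_gDrazin (fun v => t (t (t v))) -> has_gDrazin t.
Proof.
  intros Ht H. set (g := fun v => t (t (t v))).
  assert (Hg : bounded_linear g) by (unfold g; repeat (apply bl_comp; auto)).
  destruct (has_gDrazin_inv g Hg H) as [z Hz].
  pose proof (gd_bl _ _ Hz) as Hzb.
  assert (Hc : forall v, t (z v) = z (t v)) by (apply (gDrazin_inv_commute g z t); auto).
  pose proof (gd_xax g z Hz) as Hx.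
  set (p := sproj g z).
  assert (Hp : bounded_linear p) by (apply sproj_bl; auto).
  assert (Hpt : forall v, p (t v) = t (p v)).
  { intro v. unfold p, sproj, g. rewrite (bl_sub t Ht), <- Hc. reflexivity. }
  assert (Ek : forall v, vsub (t v) (t (t (t (t (z v))))) = t (p v)).
  { intro v. unfold p, sproj, g. rewrite (bl_sub t Ht). reflexivity. }
  apply gDrazin_inv_has with (x := fun v => t (t (z v))). split; [|split; [|split]].
  - repeat (apply bl_comp; auto).
  - intro v. specialize (Hx v). unfold g in Hx. rewrite Hx. reflexivity.
  - intro v. rewrite <- Hc. reflexivity.
  - apply (qnil_ext (fun v => t (p v))); [intro v; symmetry; apply Ek|].
    destruct (bl_bnd (fun v => t (p v))) as [L [Lp HL]]; [apply bl_comp; auto|].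
    apply (qnil_of_cube _ L Lp HL).
    apply (qnil_ext (fun v => g (p v))); [|apply gd_residual_qnil; auto].
    intro v. unfold g. rewrite !Hpt, !(sproj_idem g z Hg Hz). reflexivity.
Qed.

Lemma gDrazin_cube (a : V -> V) : bounded_linear a -> has_gDrazin a -> has_gDrazin (fun v => a (a (a v))).
Proof.
  intros Ha H. destruct (has_gDrazin_inv a Ha H) as [x Hx].
  pose proof (gd_bl _ _ Hx) as Hxb. pose proof (gd_comm a x Hx) as Hc.
  assert (Hr : forall v, x (x (a v)) = x v) by (intro v; rewrite <- Hc; apply (gd_xax a x Hx)).
  set (p := sproj a x).
  assert (Hpp : forall v, p (p v) = p v) by apply (sproj_idem a x Ha Hx).
  assert (Hpa : forall v, p (a v) = a (p v)) by apply (sproj_a a x Ha Hx).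
  apply gDrazin_inv_has with (x := fun v => x (x (x v))). split; [|split; [|split]].
  - repeat (apply bl_comp; auto).
  - intro v. repeat rewrite Hc. repeat rewrite Hr. reflexivity.
  - intro v. repeat rewrite Hc. reflexivity.
  - apply (qnil_ext (fun v => let k := fun u => a (p u) in k (k (k v))));
      [|apply qnil_cube, gd_residual_qnil; auto].
    intro v. simpl. rewrite !Hpa, !Hpp. unfold p, sproj.
    rewrite !(bl_sub a Ha). repeat rewrite Hc. repeat rewrite Hr. reflexivity.
Qed.

End Cube.

(** ** The direct sum [V (+) W] *)

Section DirectSum.
Context {V W : CNormSp} {HV : VecSp V} {HNV : NormSp V} {HW : VecSp W} {HNW : NormSp W}.

Lemma pair_eq (a c : V) (b d : W) : a = c -> b = d -> (a, b) = (c, d).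
Proof. intros; subst; reflexivity. Qed.

Global Instance prod_VecSp : VecSp (prodsp V W).
Proof.
  unfold VecSp, is_CVectorSpace. simpl.
  split; [|split; [|split; [|split; [|split; [|split; [|split]]]]]]; intros;
  repeat match goal with p : _ * _ |- _ => destruct p end; simpl; apply pair_eq;
  first [apply va_assoc | apply va_comm | apply va_0r | apply va_oppr | apply vs_1
        | apply vs_mul | apply vs_distv | apply vs_dists].
Qed.

Global Instance prod_NormSp : NormSp (prodsp V W).
Proof.
  unfold NormSp, is_CNorm. simpl. split; [|split; [|split]].
  - intros [a b]; simpl. pose proof (n_ge0 a). pose proof (n_ge0 b). lra.
  - intros [a b]; simpl. intro H. pose proof (n_ge0 a). pose proof (n_ge0 b).
    apply pair_eq; apply n_eq0; lra.
  - intros c [a b]; simpl. rewrite !n_scal. ring.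
  - intros [a b] [c d]; simpl. pose proof (n_tri a c). pose proof (n_tri b d). lra.
Qed.

Global Instance prod_ComplSp {CV : ComplSp V} {CW : ComplSp W} : ComplSp (prodsp V W).
Proof.
  intros u Hu.
  destruct (CV (fun n => fst (u n))) as [l1 H1].
  { intros e He. destruct (Hu e He) as [N HN]. exists N. intros m n Hm Hn.
    specialize (HN m n Hm Hn). pose proof (n_ge0 (vsub (snd (u m)) (snd (u n)))).
    unfold vsub in *. simpl in HN. lra. }
  destruct (CW (fun n => snd (u n))) as [l2 H2].
  { intros e He. destruct (Hu e He) as [N HN]. exists N. intros m n Hm Hn.
    specialize (HN m n Hm Hn). pose proof (n_ge0 (vsub (fst (u m)) (fst (u n)))).
    unfold vsub in *. simpl in HN. lra. }
  exists (l1, l2). intros e He.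
  destruct (H1 (e / 2)) as [N1 HN1]; [lra|]. destruct (H2 (e / 2)) as [N2 HN2]; [lra|].
  exists (max N1 N2). intros n Hn.
  specialize (HN1 n ltac:(lia)). specialize (HN2 n ltac:(lia)). unfold vsub in *. simpl. lra.
Qed.

Lemma bl_pair {U : CNormSp} {HU : VecSp U} {HNU : NormSp U} (f : U -> V) (g : U -> W) :
  bounded_linear f -> bounded_linear g -> bounded_linear (fun u => (f u, g u) : prodsp V W).
Proof.
  intros Hf Hg. destruct (bl_bnd f Hf) as [K1 [_ H1]]. destruct (bl_bnd g Hg) as [K2 [_ H2]].
  split; [|split].
  - intros x y. simpl. rewrite (bl_add f Hf), (bl_add g Hg). reflexivity.
  - intros a x. simpl. rewrite (bl_scal f Hf), (bl_scal g Hg). reflexivity.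
  - exists (K1 + K2). intro x. simpl. specialize (H1 x). specialize (H2 x). lra.
Qed.

Lemma bl_fst : bounded_linear (fun p : prodsp V W => fst p).
Proof. split; [|split]; auto. exists 1. intros [a b]; simpl. pose proof (n_ge0 b). lra. Qed.

Lemma bl_snd : bounded_linear (fun p : prodsp V W => snd p).
Proof. split; [|split]; auto. exists 1. intros [a b]; simpl. pose proof (n_ge0 a). lra. Qed.

End DirectSum.

(** ** Limits of sequences and Neumann-type series *)

Definition lim {W : CNormSp} (u : nat -> W) (l : W) :=
  forall eps, 0 < eps -> exists N, forall n, (N <= n)%nat -> vnorm (vsub (u n) l) < eps.

Section Limits.
Context {W : CNormSp} {HW : VecSp W} {HNW : NormSp W}.

Lemma lim_unique u (l1 l2 : W) : lim u l1 -> lim u l2 -> l1 = l2.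
Proof.
  intros H1 H2. apply vsub_eq, n_eq0, Rnot_lt_le. intro Hp.
  destruct (H1 (vnorm (vsub l1 l2) / 2)) as [N1 HN1]; [lra|].
  destruct (H2 (vnorm (vsub l1 l2) / 2)) as [N2 HN2]; [lra|].
  specialize (HN1 (max N1 N2) ltac:(lia)). specialize (HN2 (max N1 N2) ltac:(lia)).
  pose proof (n_tri_sub l1 (u (max N1 N2)) l2). pose proof (n_sub_sym l1 (u (max N1 N2))). lra.
Qed.

Lemma lim_const (l : W) : lim (fun _ => l) l.
Proof. intros e He. exists O. intros. rewrite vsub_self, n_zero. auto. Qed.

Lemma lim_add u w (l1 l2 : W) : lim u l1 -> lim w l2 -> lim (fun n => vadd (u n) (w n)) (vadd l1 l2).
Proof.
  intros H1 H2 e He. destruct (H1 (e / 2)) as [N1 HN1]; [lra|]. destruct (H2 (e / 2)) as [N2 HN2]; [lra|].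
  exists (max N1 N2). intros n Hn. rewrite vsub_add_distr. eapply Rle_lt_trans; [apply n_tri|].
  specialize (HN1 n ltac:(lia)). specialize (HN2 n ltac:(lia)). lra.
Qed.

Lemma lim_shift u (l : W) : lim u l -> lim (fun n => u (S n)) l.
Proof. intros H e He. destruct (H e He) as [N HN]. exists N. intros. apply HN. lia. Qed.

Lemma lim_ext u w (l : W) : (forall n, u n = w n) -> lim u l -> lim w l.
Proof. intros E H e He. destruct (H e He) as [N HN]. exists N. intros. rewrite <- E. auto. Qed.

Lemma lim_norm_le u (l : W) c : lim u l -> (forall n, vnorm (u n) <= c) -> vnorm l <= c.
Proof.
  intros H Hc. apply Rnot_lt_le. intro Hp. destruct (H (vnorm l - c)) as [N HN]; [lra|].
  specialize (HN N (Nat.le_refl N)). pose proof (n_sub_le l (u N)).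
  pose proof (n_sub_sym l (u N)). specialize (Hc N). lra.
Qed.

End Limits.

Section ContinuousImage.
Context {V W : CNormSp} {HV : VecSp V} {HNV : NormSp V} {HW : VecSp W} {HNW : NormSp W}.

Lemma lim_bl (f : V -> W) u l : bounded_linear f -> lim u l -> lim (fun n => f (u n)) (f l).
Proof.
  intros Hf H e He. destruct (bl_bnd f Hf) as [K [Kp HK]].
  destruct (H (e / (K + 1))) as [N HN]; [apply Rdiv_lt_0_compat; lra|].
  exists N. intros n Hn. rewrite <- (bl_sub f Hf). eapply Rle_lt_trans; [apply HK|].
  specialize (HN n Hn). apply Rle_lt_trans with ((K + 1) * vnorm (vsub (u n) l)).
  - apply Rmult_le_compat_r; [apply n_ge0 | lra].
  - apply Rmult_lt_reg_l with (/ (K + 1)); [apply Rinv_0_lt_compat; lra|].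
    rewrite <- Rmult_assoc, Rinv_l, Rmult_1_l by lra. unfold Rdiv in HN. lra.
Qed.

End ContinuousImage.

Section Series.
Context {V W : CNormSp} {HV : VecSp V} {HNV : NormSp V} {HW : VecSp W} {HNW : NormSp W}.

Fixpoint psum (t : nat -> V -> W) (N : nat) (v : V) : W :=
  match N with O => vzero | S N' => vadd (psum t N' v) (t N' v) end.

Lemma psum_tail (t : nat -> V -> W) B v n k : 0 <= B ->
  (forall n v, vnorm (t n v) <= B * (/ 2) ^ n * vnorm v) ->
  vnorm (vsub (psum t (n + k) v) (psum t n v)) <= 2 * B * (/ 2) ^ n * (1 - (/ 2) ^ k) * vnorm v.
Proof.
  intros Bp Ht. induction k as [|k IH].
  - rewrite Nat.add_0_r, vsub_self, n_zero. simpl. lra.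
  - rewrite Nat.add_succ_r. simpl psum.
    replace (vsub (vadd (psum t (n + k) v) (t (n + k)%nat v)) (psum t n v)) with
      (vadd (vsub (psum t (n + k) v) (psum t n v)) (t (n + k)%nat v))
      by (unfold vsub; rewrite <- !va_assoc; f_equal; apply va_comm).
    eapply Rle_trans; [apply n_tri|]. specialize (Ht (n + k)%nat v). rewrite pow_add in Ht.
    pose proof (n_ge0 v). simpl. lra.
Qed.

Lemma psum_cauchy (t : nat -> V -> W) B v : 0 <= B ->
  (forall n v, vnorm (t n v) <= B * (/ 2) ^ n * vnorm v) ->
  forall eps, 0 < eps -> exists N, forall m n, (N <= m)%nat -> (N <= n)%nat ->
    vnorm (vsub (psum t m v) (psum t n v)) < eps.
Proof.
  intros Bp Ht e He. set (c := 2 * B * vnorm v + 1).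
  assert (Hc : 0 < c) by (unfold c; pose proof (n_ge0 v); nra).
  destruct (pow_lt_1_zero (/ 2) ltac:(rewrite Rabs_right; lra) (e / c)) as [N HN];
    [apply Rdiv_lt_0_compat; auto|].
  assert (A : forall a k, (N <= a)%nat -> vnorm (vsub (psum t (a + k) v) (psum t a v)) < e).
  { intros a k Ha.
    apply Rle_lt_trans with (2 * B * (/ 2) ^ a * (1 - (/ 2) ^ k) * vnorm v);
      [apply psum_tail; auto|].
    specialize (HN a Ha). rewrite Rabs_right in HN by (apply Rle_ge, pow_le; lra).
    assert (0 <= (/ 2) ^ k) by (apply pow_le; lra). assert (0 <= (/ 2) ^ a) by (apply pow_le; lra).
    pose proof (n_ge0 v).
    assert (0 <= 2 * B * (/ 2) ^ a) by nra.
    assert (0 <= 2 * B * (/ 2) ^ a * vnorm v) by nra.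
    apply Rle_lt_trans with (c * (/ 2) ^ a); [unfold c; nra|].
    apply Rmult_lt_reg_l with (/ c); [apply Rinv_0_lt_compat; auto|].
    rewrite <- Rmult_assoc, Rinv_l, Rmult_1_l by lra. unfold Rdiv in HN. lra. }
  exists N. intros m n Hm Hn. destruct (Nat.le_ge_cases m n).
  - rewrite n_sub_sym. replace n with (m + (n - m))%nat by lia. apply A; auto.
  - replace m with (n + (m - n))%nat by lia. apply A; auto.
Qed.

Context {CW : ComplSp W}.

Lemma series_exists (t : nat -> V -> W) B : 0 <= B -> (forall n, bounded_linear (t n)) ->
  (forall n v, vnorm (t n v) <= B * (/ 2) ^ n * vnorm v) ->
  exists S : V -> W, bounded_linear S /\ forall v, lim (fun N => psum t N v) (S v).
Proof.
  intros Bp Hb Ht.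
  assert (Hl : forall v, exists l, lim (fun N => psum t N v) l)
    by (intro v; apply CW, psum_cauchy with B; auto).
  set (S := fun v => proj1_sig (constructive_indefinite_description _ (Hl v))).
  assert (HS : forall v, lim (fun N => psum t N v) (S v))
    by (intro v; exact (proj2_sig (constructive_indefinite_description _ (Hl v)))).
  exists S. split; [|exact HS]. split; [|split].
  - intros x y. apply (lim_unique (fun N => psum t N (vadd x y))); auto.
    apply lim_ext with (u := fun N => vadd (psum t N x) (psum t N y)); [|apply lim_add; auto].
    intro N. induction N; simpl; [rewrite va_0r; auto|].
    rewrite <- IHN, (bl_add _ (Hb N)). apply va_swap.
  - intros a x. apply (lim_unique (fun N => psum t N (vscal a x))); auto.
    apply lim_ext with (u := fun N => vscal a (psum t N x)).
    + intro N. induction N; simpl; [apply vs_z|].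
      rewrite vs_distv, <- IHN, (bl_scal _ (Hb N)). reflexivity.
    + apply (lim_bl (fun w => vscal a w)); auto. split; [|split].
      * intros. apply vs_distv.
      * intros. rewrite !vs_mul. f_equal. unfold Cmul. f_equal; ring.
      * exists (Cabs a). intro. rewrite n_scal. lra.
  - exists (2 * B). intro v. apply (lim_norm_le _ _ _ (HS v)). intro N.
    pose proof (psum_tail t B v 0 N Bp Ht) as H. simpl in H. rewrite vsub_0r in H.
    eapply Rle_trans; [apply H|]. pose proof (n_ge0 v).
    assert (0 <= (/ 2) ^ N) by (apply pow_le; lra).
    assert (0 <= 2 * B * vnorm v) by (apply Rmult_le_pos; lra). nra.
Qed.

(** Existence: [X = sum_n G^n C0 H^n] solves [X = G X H + C0]. *)
Lemma sylvester_exists (G : W -> W) (H : V -> V) (C0 : V -> W) :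
  bounded_linear G -> bounded_linear H -> bounded_linear C0 -> qnil G \/ qnil H ->
  exists X : V -> W, bounded_linear X /\ forall v, X v = vadd (G (X (H v))) (C0 v).
Proof.
  intros HG HH HC Hq.
  set (t := fun n v => oppow n G (C0 (oppow n H v))).
  destruct (sylvester_term_bound G H C0 HG HH HC Hq) as [B [Bp HB]].
  assert (Htb : forall n, bounded_linear (t n))
    by (intro n; unfold t; repeat (apply bl_comp; auto; try apply oppow_bl; auto)).
  destruct (series_exists t B Bp Htb HB) as [X [HX HXl]].
  exists X. split; auto. intro v.
  assert (Hsh : forall n u, G (t n (H u)) = t (S n) u)
    by (intros n u; unfold t; simpl; rewrite <- (oppow_S' n H u); reflexivity).
  assert (Hshift : forall N, psum t (S N) v = vadd (t O v) (G (psum t N (H v)))).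
  { induction N as [|N IH]; [simpl; rewrite (bl_0 G HG), va_0l, va_0r; reflexivity|].
    change (psum t (S (S N)) v) with (vadd (psum t (S N) v) (t (S N) v)).
    rewrite IH. simpl. rewrite (bl_add G HG), Hsh, va_assoc. reflexivity. }
  apply (lim_unique (fun N => psum t (S N) v)); [apply (lim_shift (fun N => psum t N v)); auto|].
  apply lim_ext with (u := fun N => vadd (t O v) (G (psum t N (H v)))); [intro N; auto|].
  rewrite va_comm. apply lim_add; [apply lim_const | apply lim_bl; auto].
Qed.

End Series.

(** ** A decision procedure for identities in abelian groups

   An expression built from [vadd], [vsub], [vopp], [vzero] over atoms is
   normalised to its list of atom multiplicities, each an integer represented
   as a pair of naturals (positive count, negative count); two expressions are
   equal when all multiplicities of their difference vanish. *)

Inductive gexp := GAtom (n : nat) | GZero | GAdd (a b : gexp) | GOpp (a : gexp) | GSub (a b : gexp).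

Section AbelianNormalisation.
Context {V : CNormSp} {HV : VecSp V}.

Fixpoint ginterp (env : list V) (e : gexp) : V :=
  match e with
  | GAtom n => nth n env vzero
  | GZero => vzero
  | GAdd a b => vadd (ginterp env a) (ginterp env b)
  | GOpp a => vopp (ginterp env a)
  | GSub a b => vsub (ginterp env a) (ginterp env b)
  end.

Fixpoint nmul (k : nat) (x : V) : V := match k with O => vzero | S k' => vadd x (nmul k' x) end.

Lemma nmul_add k1 k2 x : nmul (k1 + k2) x = vadd (nmul k1 x) (nmul k2 x).
Proof. induction k1; simpl; [rewrite va_0l | rewrite IHk1, va_assoc]; reflexivity. Qed.

Definition csem (c : nat * nat) (x : V) := vsub (nmul (fst c) x) (nmul (snd c) x).

Fixpoint lsem (env : list V) (l : list (nat * nat)) : V :=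
  match l with
  | [] => vzero
  | c :: l' => vadd (csem c (hd vzero env)) (lsem (tl env) l')
  end.

Fixpoint ladd (l1 l2 : list (nat * nat)) : list (nat * nat) :=
  match l1, l2 with
  | [], _ => l2
  | _, [] => l1
  | c1 :: r1, c2 :: r2 => (fst c1 + fst c2, snd c1 + snd c2)%nat :: ladd r1 r2
  end.

Definition lopp (l : list (nat * nat)) : list (nat * nat) := map (fun c => (snd c, fst c)) l.

Fixpoint lsingle (n : nat) : list (nat * nat) :=
  match n with O => [(1%nat, 0%nat)] | S n' => (0%nat, 0%nat) :: lsingle n' end.

Fixpoint gnf (e : gexp) : list (nat * nat) :=
  match e with
  | GAtom n => lsingle n
  | GZero => []
  | GAdd a b => ladd (gnf a) (gnf b)
  | GOpp a => lopp (gnf a)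
  | GSub a b => ladd (gnf a) (lopp (gnf b))
  end.

Lemma ladd_ok env l1 l2 : lsem env (ladd l1 l2) = vadd (lsem env l1) (lsem env l2).
Proof.
  revert env l2. induction l1 as [|c1 l1 IH]; intros env l2; simpl; [rewrite va_0l; auto|].
  destruct l2 as [|c2 l2]; simpl; [rewrite va_0r; auto|].
  unfold csem at 1; simpl. rewrite !nmul_add, vsub_add_distr, IH. apply va_swap.
Qed.

Lemma lopp_ok env l : lsem env (lopp l) = vopp (lsem env l).
Proof.
  revert env. induction l as [|c l IH]; intros env; simpl; [rewrite vopp_zero; auto|].
  rewrite IH, vopp_add. f_equal. unfold csem, vsub; simpl.
  rewrite vopp_add, vopp_opp, va_comm. reflexivity.
Qed.

Lemma lsingle_ok env n : lsem env (lsingle n) = nth n env vzero.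
Proof.
  revert env. induction n as [|n IH]; intros env; simpl; unfold csem; simpl.
  - rewrite va_0r, va_0r, vsub_0r. destruct env; reflexivity.
  - rewrite vsub_self, va_0l, IH. destruct env as [|x env]; simpl; auto. destruct n; reflexivity.
Qed.

Lemma gnf_ok env e : ginterp env e = lsem env (gnf e).
Proof.
  induction e; simpl; rewrite ?ladd_ok, ?lopp_ok, ?lsingle_ok, ?IHe, ?IHe1, ?IHe2; reflexivity.
Qed.

Definition lzero (l : list (nat * nat)) : bool := forallb (fun c => Nat.eqb (fst c) (snd c)) l.

Lemma lzero_ok env l : lzero l = true -> lsem env l = vzero.
Proof.
  revert env. induction l as [|c l IH]; intros env H; simpl; auto.
  simpl in H. apply andb_prop in H. destruct H as [H1 H2].
  apply PeanoNat.Nat.eqb_eq in H1. rewrite IH by auto. unfold csem. rewrite H1, vsub_self, va_0r.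
  reflexivity.
Qed.

Lemma abel_ok env e1 e2 : lzero (gnf (GSub e1 e2)) = true -> ginterp env e1 = ginterp env e2.
Proof.
  intro H. apply vsub_eq. change (vsub (ginterp env e1) (ginterp env e2)) with (ginterp env (GSub e1 e2)).
  rewrite gnf_ok. apply lzero_ok, H.
Qed.

End AbelianNormalisation.

Ltac g_mem x l :=
  match l with
  | nil => constr:(false)
  | cons x _ => constr:(true)
  | cons _ ?l' => g_mem x l'
  end.

Ltac g_atoms t l :=
  match t with
  | vadd ?a ?b => let l1 := g_atoms a l in g_atoms b l1
  | vsub ?a ?b => let l1 := g_atoms a l in g_atoms b l1
  | vopp ?a => g_atoms a l
  | vzero => l
  | _ => let b := g_mem t l in
         match b with true => l | false => constr:(cons t l) end
  end.

Ltac g_idx x l :=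
  match l with
  | cons x _ => constr:(O)
  | cons _ ?l' => let n := g_idx x l' in constr:(S n)
  end.

Ltac g_quote t l :=
  match t with
  | vadd ?a ?b => let qa := g_quote a l in let qb := g_quote b l in constr:(GAdd qa qb)
  | vsub ?a ?b => let qa := g_quote a l in let qb := g_quote b l in constr:(GSub qa qb)
  | vopp ?a => let qa := g_quote a l in constr:(GOpp qa)
  | vzero => constr:(GZero)
  | _ => let n := g_idx t l in constr:(GAtom n)
  end.

Ltac abel :=
  match goal with
  | |- @eq (car ?V) ?L ?R =>
    let l1 := g_atoms L (@nil (car V)) in
    let l := g_atoms R l1 in
    let qL := g_quote L l in
    let qR := g_quote R l in
    change (ginterp l qL = ginterp l qR);
    apply abel_ok; vm_compute; reflexivity
  end.

(** ** Lower triangular operator matrices [[a, 0], [c, d]] *)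

Definition lower_tri {V1 V2 : CNormSp} (a : V1 -> V1) (c : V1 -> V2) (d : V2 -> V2)
  (p : prodsp V1 V2) : prodsp V1 V2 := (a (fst p), vadd (c (fst p)) (d (snd p))).

Section TriangularPowers.
Context {V1 V2 : CNormSp} {HV1 : VecSp V1} {HN1 : NormSp V1} {HV2 : VecSp V2} {HN2 : NormSp V2}.
Variables (qa : V1 -> V1) (k : V1 -> V2) (qd : V2 -> V2).

(** Corner of the [n]-th power: [sum_(i < n) qd^(n-1-i) k qa^i]. *)
Fixpoint tri_corner (n : nat) (v : V1) : V2 :=
  match n with O => vzero | S n' => vadd (qd (tri_corner n' v)) (k (oppow n' qa v)) end.

Lemma lower_tri_pow : bounded_linear qd -> forall n v u,
  oppow n (lower_tri qa k qd) (v, u) = (oppow n qa v, vadd (tri_corner n v) (oppow n qd u)).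
Proof.
  intros Hd n v u. induction n as [|n IH]; [simpl; rewrite va_0l; reflexivity|].
  change (oppow (S n) ?T ?x) with (T (oppow n T x)). rewrite IH. unfold lower_tri. simpl.
  f_equal. rewrite (bl_add qd Hd), va_assoc. f_equal. apply va_comm.
Qed.

Hypotheses (Hd : bounded_linear qd) (Hk : bounded_linear k).

Lemma tri_corner_bound e K1 K2 Kk : 0 < e -> 1 <= K1 -> 0 <= K2 -> 0 <= Kk -> bnd k Kk ->
  (forall n v, vnorm (oppow n qa v) <= K1 * e ^ n * vnorm v) ->
  (forall n u, vnorm (oppow n qd u) <= K2 * e ^ n * vnorm u) ->
  forall n m v, vnorm (oppow m qd (tri_corner (S n) v)) <= INR (S n) * (K1 * K2 * Kk) * e ^ (m + n) * vnorm v.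
Proof.
  intros He HK1 HK2p HKkp HKk Ha Hdd n. pose proof (n_ge0 (V := V1)) as Hn.
  induction n as [|n IH]; intros m v; pose proof (Hn v); assert (0 <= e ^ m) by (apply pow_le; lra).
  - simpl. rewrite (bl_0 qd Hd), va_0l, Nat.add_0_r.
    eapply Rle_trans; [apply Hdd|].
    apply Rle_trans with (K2 * e ^ m * (Kk * vnorm v));
      [apply Rmult_le_compat_l; [apply Rmult_le_pos|apply HKk]; lra|].
    assert (0 <= K2 * e ^ m * (Kk * vnorm v)) by (repeat apply Rmult_le_pos; lra). nra.
  - change (tri_corner (S (S n)) v) with (vadd (qd (tri_corner (S n) v)) (k (oppow (S n) qa v))).
    rewrite (bl_add _ (oppow_bl m qd Hd)). eapply Rle_trans; [apply n_tri|].
    rewrite <- oppow_S'. pose proof (IH (S m) v) as A1.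
    replace (S m + n)%nat with (m + S n)%nat in A1 by lia.
    assert (A2 : vnorm (oppow m qd (k (oppow (S n) qa v))) <= K1 * K2 * Kk * e ^ (m + S n) * vnorm v).
    { eapply Rle_trans; [apply Hdd|].
      eapply Rle_trans; [apply Rmult_le_compat_l; [apply Rmult_le_pos; lra | apply HKk]|].
      eapply Rle_trans; [apply Rmult_le_compat_l; [apply Rmult_le_pos; lra|];
        apply Rmult_le_compat_l; [lra | apply Ha]|].
      right. rewrite pow_add. ring. }
    rewrite (S_INR (S n)). lra.
Qed.

Lemma lower_tri_qnil : bounded_linear qa -> qnil qa -> qnil qd -> qnil (lower_tri qa k qd).
Proof.
  intros Ha Hqa Hqd dl Hdl. set (e := dl / 2). assert (He : 0 < e) by (unfold e; lra).
  destruct (Hqa e He) as [K1' [K1p HK1']]. destruct (Hqd e He) as [K2 [K2p HK2]].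
  destruct (bl_bnd k Hk) as [Kk [Kkp HKk]].
  set (K1 := Rmax K1' 1). assert (K1g : 1 <= K1) by apply Rmax_r.
  assert (HK1 : forall n v, vnorm (oppow n qa v) <= K1 * e ^ n * vnorm v).
  { intros n v. eapply Rle_trans; [apply HK1'|]. apply Rmult_le_compat_r; [apply n_ge0|].
    apply Rmult_le_compat_r; [apply pow_le; lra | apply Rmax_l]. }
  set (C := K1 * K2 * Kk). assert (Cp : 0 <= C) by (unfold C; repeat apply Rmult_le_pos; lra).
  set (Kc := 2 * C / dl).
  assert (Kcp : 0 <= Kc) by (unfold Kc, Rdiv; apply Rmult_le_pos; [lra | left; apply Rinv_0_lt_compat; lra]).
  assert (Hpow : forall n, e ^ n = dl ^ n * (/ 2) ^ n) by (intro n; unfold e, Rdiv; apply Rpow_mult_distr).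
  assert (Hmono : forall n, e ^ n <= dl ^ n) by (intro n; apply pow_incr; unfold e; lra).
  exists (K1 + K2 + Kc). split; [lra|].
  intros n [v u]. rewrite lower_tri_pow by auto. simpl.
  pose proof (n_ge0 v). pose proof (n_ge0 u). assert (0 <= dl ^ n) by (apply pow_le; lra).
  assert (P1 : vnorm (oppow n qa v) <= K1 * dl ^ n * vnorm v).
  { eapply Rle_trans; [apply HK1|]. specialize (Hmono n). apply Rmult_le_compat_r; nra. }
  assert (P2 : vnorm (oppow n qd u) <= K2 * dl ^ n * vnorm u).
  { eapply Rle_trans; [apply HK2|]. specialize (Hmono n). apply Rmult_le_compat_r; nra. }
  assert (P3 : vnorm (tri_corner n v) <= Kc * dl ^ n * vnorm v).
  { destruct n as [|n]; [simpl; rewrite n_zero; nra|].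
    eapply Rle_trans; [apply (tri_corner_bound e K1 K2 Kk He K1g K2p Kkp HKk HK1 HK2 n O v)|].
    simpl (0 + n)%nat. apply Rmult_le_compat_r; auto. rewrite Hpow.
    pose proof (INR_le_2pow (S n)) as I1. change (2 ^ S n) with (2 * 2 ^ n) in I1.
    assert (E : 2 ^ n * (/ 2) ^ n = 1) by (rewrite <- Rpow_mult_distr, Rinv_r, pow1; lra).
    assert (0 <= (/ 2) ^ n) by (apply pow_le; lra). assert (0 <= dl ^ n) by (apply pow_le; lra).
    replace (Kc * dl ^ S n) with (2 * C * dl ^ n) by (unfold Kc; simpl; field; lra).
    apply Rle_trans with (2 * 2 ^ n * C * (dl ^ n * (/ 2) ^ n)).
    - apply Rmult_le_compat_r; [apply Rmult_le_pos; auto|]. apply Rmult_le_compat_r; auto.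
    - right. replace (2 * 2 ^ n * C * (dl ^ n * (/ 2) ^ n)) with (2 * C * dl ^ n * (2 ^ n * (/ 2) ^ n))
        by ring. rewrite E. ring. }
  pose proof (n_tri (tri_corner n v) (oppow n qd u)).
  assert (0 <= K2 * dl ^ n * vnorm v) by (apply Rmult_le_pos; [apply Rmult_le_pos|]; lra).
  assert (0 <= K1 * dl ^ n * vnorm u) by (apply Rmult_le_pos; [apply Rmult_le_pos|]; lra).
  assert (0 <= Kc * dl ^ n * vnorm u) by (apply Rmult_le_pos; [apply Rmult_le_pos|]; lra).
  assert (K1 * dl ^ n * vnorm v + Kc * dl ^ n * vnorm v + K2 * dl ^ n * vnorm u <=
          (K1 + K2 + Kc) * dl ^ n * (vnorm v + vnorm u)) by nra.
  lra.
Qed.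

End TriangularPowers.

Section TriangularInverse.
Context {V1 V2 : CNormSp} {HV1 : VecSp V1} {HN1 : NormSp V1} {HV2 : VecSp V2} {HN2 : NormSp V2}
  {CV2 : ComplSp V2}.
Variables (a x : V1 -> V1) (c : V1 -> V2) (d y : V2 -> V2).
Hypotheses (Ha : bounded_linear a) (Hc : bounded_linear c) (Hd : bounded_linear d)
  (Hx : gDrazin_inv a x) (Hy : gDrazin_inv d y).

Let pa := sproj a x.
Let pd := sproj d y.

Let Hxb : bounded_linear x := gd_bl a x Hx.
Let Hyb : bounded_linear y := gd_bl d y Hy.
Let Hpa : bounded_linear pa := sproj_bl a x Ha Hx.
Let Hpd : bounded_linear pd := sproj_bl d y Hd Hy.

(** First Sylvester solution [w1 = y w1 (a pa) + y^2 c pa], living on the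
    quasinilpotent part of [a] and the invertible part of [d]. *)
Lemma corner_left : exists w1 : V1 -> V2, bounded_linear w1 /\
  (forall v, d (w1 v) = vadd (w1 (a v)) (y (c (pa v)))) /\
  (forall v, w1 (a (x v)) = vzero) /\
  (forall v, w1 v = vadd (y (w1 (a v))) (y (y (c (pa v))))).
Proof.
  assert (HC0 : bounded_linear (fun v => y (y (c (pa v))))) by (repeat (apply bl_comp; auto)).
  destruct (sylvester_exists y (fun v => a (pa v)) _ Hyb (bl_comp a pa Ha Hpa) HC0
    (or_intror (gd_residual_qnil a x Ha Hx))) as [w1 [Hw1 E1]].
  pose proof (gd_axx d y Hy) as dyy. pose proof (sproj_idem a x Ha Hx) as pa_pa.
  pose proof (sproj_a a x Ha Hx) as pa_a. fold pa in pa_pa, pa_a.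
  assert (F1 : forall z, d (y (w1 z)) = w1 z)
    by (intro z; rewrite (E1 z), (bl_add y Hyb), (bl_add d Hd), !dyy; reflexivity).
  assert (F4 : forall v, w1 (pa v) = w1 v) by (intro v; rewrite (E1 (pa v)), (E1 v), !pa_pa; reflexivity).
  exists w1. split; [|split; [|split]]; auto.
  - intro v. rewrite (E1 v), (bl_add d Hd), F1, dyy, <- pa_a, F4. reflexivity.
  - intro v. rewrite <- F4, pa_a. unfold pa. rewrite sproj_x, (bl_0 a Ha), (bl_0 w1 Hw1); auto.
  - intro v. rewrite (E1 v) at 1. rewrite <- pa_a, F4. reflexivity.
Qed.

(** Second Sylvester solution [w2 = d pd w2 x + pd c x^2], living on the
    invertible part of [a] and the quasinilpotent part of [d]. *)
Lemma corner_right : exists w2 : V1 -> V2, bounded_linear w2 /\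
  (forall v, w2 (a v) = vadd (d (w2 v)) (pd (c (x v)))) /\
  (forall u, y (w2 u) = vzero) /\
  (forall v, w2 (a (x v)) = w2 v).
Proof.
  assert (HC0 : bounded_linear (fun v => pd (c (x (x v))))) by (repeat (apply bl_comp; auto)).
  destruct (sylvester_exists (fun u => d (pd u)) x _ (bl_comp d pd Hd Hpd) Hxb HC0
    (or_introl (gd_residual_qnil d y Hd Hy))) as [w2 [Hw2 E2]].
  pose proof (gd_xax a x Hx) as xax. pose proof (gd_comm a x Hx) as ca.
  assert (F2 : forall v, pd (w2 v) = w2 v).
  { intro v. rewrite (E2 v), (bl_add pd Hpd). unfold pd.
    rewrite (sproj_a d y Hd Hy), !(sproj_idem d y Hd Hy). reflexivity. }
  assert (F3 : forall v, w2 (a (x v)) = w2 v) by (intro v; rewrite (E2 (a (x v))), (E2 v), xax; reflexivity).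
  exists w2. split; [|split; [|split]]; auto.
  - intro v. rewrite (E2 (a v)), <- (ca v), F3, xax, F2. reflexivity.
  - intro u. rewrite <- F2. apply x_sproj; auto.
Qed.

(** The corner [w = w1 + w2 - y c x] of the g-Drazin inverse [[x, 0], [w, y]]:
    the two identities express commutation with the matrix and [X M X = X]. *)
Lemma corner_exists : exists w : V1 -> V2, bounded_linear w /\
  (forall v, vadd (c (x v)) (d (w v)) = vadd (w (a v)) (y (c v))) /\
  (forall v, vadd (vadd (w (a (x v))) (y (c (x v)))) (y (d (w v))) = w v).
Proof.
  destruct corner_left as [w1 [Hw1 [D1 [G1 G3]]]].
  destruct corner_right as [w2 [Hw2 [D2 [G2 F3]]]].
  pose proof (gd_xax a x Hx) as xax. pose proof (gd_comm a x Hx) as ca.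
  set (w := fun v => vadd (vadd (w1 v) (w2 v)) (vopp (y (c (x v))))).
  assert (Eq2 : forall v, vadd (c (x v)) (d (w v)) = vadd (w (a v)) (y (c v))).
  { intro v. unfold w. rewrite !(bl_add d Hd), (bl_opp d Hd), D1, D2.
    unfold pa, pd, sproj. rewrite (bl_sub c Hc), (bl_sub y Hyb), ca. abel. }
  exists w. split; [|split; [exact Eq2|]].
  - unfold w. apply bl_plus; [apply bl_plus; auto | apply bl_neg; repeat (apply bl_comp; auto)].
  - intro v. replace (d (w v)) with (vsub (vadd (w (a v)) (y (c v))) (c (x v)))
      by (rewrite <- Eq2; abel).
    rewrite (bl_sub y Hyb), (bl_add y Hyb). unfold w.
    rewrite !(bl_add y Hyb), (bl_opp y Hyb), G2, G1, F3, xax, (G3 v).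
    unfold pa, sproj. rewrite (bl_sub c Hc), !(bl_sub y Hyb), ca. abel.
Qed.

Lemma lower_tri_gDrazin_of_inv : has_gDrazin (lower_tri a c d).
Proof.
  destruct corner_exists as [w [Hw [Eq2 Eq1]]].
  pose proof (gd_xax a x Hx) as xax. pose proof (gd_comm a x Hx) as ca.
  pose proof (gd_xax d y Hy) as ydy. pose proof (gd_comm d y Hy) as cd.
  apply gDrazin_inv_has with (x := fun p : prodsp V1 V2 => (x (fst p), vadd (w (fst p)) (y (snd p)))).
  split; [|split; [|split]].
  - apply bl_pair; [apply bl_comp; auto; apply bl_fst|].
    apply bl_plus; apply bl_comp; auto; [apply bl_fst | apply bl_snd].
  - intros [v u]. unfold lower_tri. simpl. apply pair_eq; [apply xax|].
    rewrite (bl_add y Hyb), (bl_add d Hd), (bl_add y Hyb), ydy. rewrite <- (Eq1 v) at 2. abel.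
  - intros [v u]. unfold lower_tri. simpl. apply pair_eq; [apply ca|].
    rewrite (bl_add y Hyb), (bl_add d Hd), cd, va_assoc, Eq2. abel.
  - set (k := fun v => vsub (c (pa v)) (d (vadd (c (x v)) (d (w v))))).
    apply qnil_ext with (T := lower_tri (fun v => a (pa v)) k (fun u => d (pd u))).
    + intros [v u]. unfold lower_tri. simpl. apply pair_eq.
      * rewrite <- (gd_residual a x Ha). reflexivity.
      * unfold k, pa, pd, sproj. rewrite !(bl_sub c Hc), !(bl_sub d Hd), !(bl_add d Hd). abel.
    + assert (Hk : bounded_linear k).
      { unfold k. apply bl_minus; [apply bl_comp; auto|].
        apply bl_comp; auto. apply bl_plus; [apply bl_comp; auto|].
        apply bl_comp; auto. }
      apply lower_tri_qnil; [apply bl_comp; auto | exact Hk | apply bl_comp; auto | |];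
        apply gd_residual_qnil; auto.
Qed.

End TriangularInverse.

Lemma lower_triangular_gDrazin {V1 V2 : CNormSp} {HV1 : VecSp V1} {HN1 : NormSp V1}
  {HV2 : VecSp V2} {HN2 : NormSp V2} {CV2 : ComplSp V2}
  (a : V1 -> V1) (c : V1 -> V2) (d : V2 -> V2) :
  bounded_linear a -> bounded_linear c -> bounded_linear d ->
  has_gDrazin a -> has_gDrazin d -> has_gDrazin (lower_tri a c d).
Proof.
  intros Ha Hc Hd Ga Gd.
  destruct (has_gDrazin_inv a Ha Ga) as [x Hx]. destruct (has_gDrazin_inv d Hd Gd) as [y Hy].
  apply (lower_tri_gDrazin_of_inv a x c d y); auto.
Qed.

(** ** Sums of orthogonal g-Drazin invertible operators *)

Section OrthogonalSum.
Context {V : CNormSp} {HV : VecSp V} {HN : NormSp V} {CV : ComplSp V}.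

Lemma zero_gDrazin : has_gDrazin (fun _ : V => @vzero V).
Proof.
  apply gDrazin_inv_has with (x := fun _ => vzero). split; [apply bl_zero|]. split; [|split]; auto.
  apply (qnil_ext (fun _ => vzero)); [intro v; rewrite vsub_0r; reflexivity|].
  intros e He. exists 1. split; [lra|]. intros n v. pose proof (n_ge0 v).
  destruct n as [|n]; [simpl; lra|]. simpl oppow. rewrite n_zero.
  apply Rmult_le_pos; [apply Rmult_le_pos; [lra | apply pow_le; lra] | auto].
Qed.

(** If [P Q = 0], then [P + Q = f g] with [f (z1, z2) = z1 + Q z2] and [g v = (P v, v)],
    while [g f = [[P, 0], [1, Q]]] is lower triangular; conclude by Cline's formula. *)
Lemma gDrazin_add_orthogonal (P Q : V -> V) : bounded_linear P -> bounded_linear Q ->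
  has_gDrazin P -> has_gDrazin Q -> (forall v, P (Q v) = vzero) ->
  has_gDrazin (fun v => vadd (P v) (Q v)).
Proof.
  intros HP HQ GP GQ E.
  apply (cline (fun z : prodsp V V => vadd (fst z) (Q (snd z))) (fun v => (P v, v) : prodsp V V)).
  - apply bl_plus; [apply bl_fst | apply bl_comp; auto; apply bl_snd].
  - apply bl_pair; [auto | apply bl_id].
  - apply has_gDrazin_ext with (a := lower_tri P (fun v => v) Q);
      [apply lower_triangular_gDrazin; auto; apply bl_id|].
    intros [v u]. unfold lower_tri. simpl. apply pair_eq; auto.
    rewrite (bl_add P HP), E, va_0r. reflexivity.
Qed.

End OrthogonalSum.

(** ** The operator matrix [M = [[A, B], [C, D]]] *)

Ltac expand_lin := repeat first [
  progress (rewrite ?va_0r, ?va_0l) |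
  match goal with H : bounded_linear ?f |- _ => progress (rewrite ?(bl_add f H), ?(bl_0 f H)) end |
  match goal with H : forall _, _ = vzero |- _ => progress (rewrite ?H) end ].

Section OperatorMatrix.
Context {X Y : CNormSp} {VX : VecSp X} {NX : NormSp X} {VY : VecSp Y} {NY : NormSp Y}.
Variables (A : X -> X) (B : Y -> X) (Cc : X -> Y) (D : Y -> Y).
Hypotheses (hA : bounded_linear A) (hB : bounded_linear B)
  (hC : bounded_linear Cc) (hD : bounded_linear D).

Let M := opmatrix A B Cc D.
Let row1 (z : prodsp X Y) : X := vadd (A (fst z)) (B (snd z)).
Let row2 (z : prodsp X Y) : Y := vadd (Cc (fst z)) (D (snd z)).
Let inj1 (w : X) : prodsp X Y := (w, vzero).
Let inj2 (y : Y) : prodsp X Y := (vzero, y).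

Lemma opmatrix_bl : bounded_linear M.
Proof.
  unfold M, opmatrix.
  apply bl_pair; apply bl_plus; apply bl_comp; auto; first [apply bl_fst | apply bl_snd].
Qed.

Lemma opmatrix_cube_split z :
  M (M (M z)) = vadd (M (M (inj1 (row1 z)))) (M (M (inj2 (row2 z)))).
Proof.
  assert (Hsplit : M z = vadd (inj1 (row1 z)) (inj2 (row2 z))).
  { unfold M, opmatrix, inj1, inj2, row1, row2. simpl. rewrite va_0r, va_0l. reflexivity. }
  rewrite Hsplit, !(bl_add _ opmatrix_bl). reflexivity.
Qed.

Lemma bl_inj1 : bounded_linear inj1.
Proof. apply bl_pair; [apply bl_id | apply bl_zero]. Qed.
Lemma bl_inj2 : bounded_linear inj2.
Proof. apply bl_pair; [apply bl_zero | apply bl_id]. Qed.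
Lemma bl_row1 : bounded_linear row1.
Proof. apply bl_plus; apply bl_comp; auto; [apply bl_fst | apply bl_snd]. Qed.
Lemma bl_row2 : bounded_linear row2.
Proof. apply bl_plus; apply bl_comp; auto; [apply bl_fst | apply bl_snd]. Qed.

Context {CX : ComplSp X} {CY : ComplSp Y}.
Hypotheses (gA : has_gDrazin A) (gD : has_gDrazin D)
  (hABC : forall x : X, A (B (Cc x)) = vzero)
  (hABD : forall y : Y, A (B (D y)) = vzero)
  (hDCB : forall y : Y, D (Cc (B y)) = vzero)
  (hBCBC : forall x : X, B (Cc (B (Cc x))) = vzero)
  (hBCBD : forall y : Y, B (Cc (B (D y))) = vzero).

(** [C A B] is g-Drazin invertible: by Cline's formula it is so iff [A B C = 0] is. *)
Lemma CAB_gDrazin : has_gDrazin (fun y => Cc (A (B y))).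
Proof.
  apply (cline Cc (fun y => A (B y))); auto; [apply bl_comp; auto|].
  apply has_gDrazin_ext with (a := fun _ => vzero); [apply zero_gDrazin | intro; auto].
Qed.

(** [row1 M^2 inj1 = A^3 + B (C A + D C)]; both terms are g-Drazin invertible
    ([B (C A + D C)] by Cline, reducing to [C A B]) and [A^3 B (C A + D C) = 0]. *)
Lemma left_block_gDrazin : has_gDrazin (fun w => row1 (M (M (inj1 w)))).
Proof.
  set (F := fun w : X => vadd (Cc (A w)) (D (Cc w))).
  assert (HF : bounded_linear F) by (apply bl_plus; apply bl_comp; auto).
  apply has_gDrazin_ext with (a := fun w => vadd (A (A (A w))) (B (F w))).
  2:{ intro w. unfold F, row1, M, opmatrix, inj1. simpl. expand_lin. abel. }
  apply gDrazin_add_orthogonal.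
  - repeat (apply bl_comp; auto).
  - apply bl_comp; auto.
  - apply gDrazin_cube; auto.
  - apply (cline B F); auto.
    apply has_gDrazin_ext with (a := fun y => Cc (A (B y))); [apply CAB_gDrazin|].
    intro y. unfold F. expand_lin. reflexivity.
  - intro w. unfold F. expand_lin. reflexivity.
Qed.

(** [row2 M^2 inj2 = C A B + (D^3 + C B D)], two orthogonal g-Drazin invertible
    terms; [C B D] reduces by Cline's formula twice to [D C B = 0]. *)
Lemma right_block_gDrazin : has_gDrazin (fun y => row2 (M (M (inj2 y)))).
Proof.
  apply has_gDrazin_ext with (a := fun y => vadd (Cc (A (B y))) (vadd (D (D (D y))) (Cc (B (D y))))).
  2:{ intro y. unfold row2, M, opmatrix, inj2. simpl. expand_lin. abel. }
  apply gDrazin_add_orthogonal.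
  - repeat (apply bl_comp; auto).
  - apply bl_plus; repeat (apply bl_comp; auto).
  - apply CAB_gDrazin.
  - apply gDrazin_add_orthogonal.
    + repeat (apply bl_comp; auto).
    + repeat (apply bl_comp; auto).
    + apply gDrazin_cube; auto.
    + apply (cline Cc (fun y => B (D y))); auto; [apply bl_comp; auto|].
      apply (cline B (fun w => D (Cc w))); auto; [apply bl_comp; auto|].
      apply has_gDrazin_ext with (a := fun _ => vzero); [apply zero_gDrazin | intro; auto].
    + intro y. expand_lin. reflexivity.
  - intro y. expand_lin. reflexivity.
Qed.

(** [P Q = 0]: expanding, every term contains one of the five vanishing products. *)
Lemma cube_parts_orthogonal z :
  M (M (inj1 (row1 (M (M (inj2 (row2 z))))))) = vzero.
Proof.
  destruct z as [z1 z2]. unfold row1, row2, M, opmatrix, inj1, inj2. simpl. expand_lin. reflexivity.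
Qed.

(** [M^3] is g-Drazin invertible: [P] and [Q] are so by Cline's formula, and [P Q = 0]. *)
Lemma opmatrix_cube_gDrazin : has_gDrazin (fun z => M (M (M z))).
Proof.
  pose proof opmatrix_bl as HM.
  apply has_gDrazin_ext with
    (a := fun z => vadd (M (M (inj1 (row1 z)))) (M (M (inj2 (row2 z)))));
    [|intro z; symmetry; apply opmatrix_cube_split].
  pose proof bl_inj1. pose proof bl_inj2. pose proof bl_row1. pose proof bl_row2.
  apply gDrazin_add_orthogonal; [repeat (apply bl_comp; auto) .. | apply cube_parts_orthogonal].
  - apply (cline (fun w => M (M (inj1 w))) row1); [repeat (apply bl_comp; auto) | auto |].
    apply left_block_gDrazin.
  - apply (cline (fun y => M (M (inj2 y))) row2); [repeat (apply bl_comp; auto) | auto |].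
    apply right_block_gDrazin.
Qed.

End OperatorMatrix.

Theorem theorem3p3 (X Y : CNormSp) (HX : is_CBanach X) (HY : is_CBanach Y)
  (A : X -> X) (B : Y -> X) (Cc : X -> Y) (D : Y -> Y)
  (hA : bounded_linear A) (hB : bounded_linear B)
  (hC : bounded_linear Cc) (hD : bounded_linear D)
  (gA : has_gDrazin A) (gD : has_gDrazin D)
  (hABC : forall x : X, A (B (Cc x)) = vzero)
  (hABD : forall y : Y, A (B (D y)) = vzero)
  (hDCB : forall y : Y, D (Cc (B y)) = vzero)
  (hBCBC : forall x : X, B (Cc (B (Cc x))) = vzero)
  (hBCBD : forall y : Y, B (Cc (B (D y))) = vzero) :
  has_gDrazin (opmatrix A B Cc D).
Proof.
  destruct HX as [VX [NX CX]], HY as [VY [NY CY]].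
  change (VecSp X) in VX. change (NormSp X) in NX. change (ComplSp X) in CX.
  change (VecSp Y) in VY. change (NormSp Y) in NY. change (ComplSp Y) in CY.
  apply gDrazin_of_cube; [apply opmatrix_bl; auto|].
  apply opmatrix_cube_gDrazin; auto.
Qed.
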